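(* Let $\mathbb{H}$ be a real Hilbert space and $0\neq T\in\mathbb{B}(\mathbb{H})$. Then the following are equivalent: (i) $T$ is a smooth point of $\mathbb{B}(\mathbb{H})$. (ii) $M_T=\{\pm x_0\}$ for some $x_0\in S_{\mathbb{H}}$, and $\|T|_{H_0}\|<\|T\|$, where $H_0=\{x_0\}^{\perp}$ is the orthogonal complement of $x_0$. (iii) For every $A\in\mathbb{B}(\mathbb{H})$: $T\perp_B A$ if and only if for every norming sequence $\{x_n\}$ for $T$, every subsequential limit of $\{\langle Ax_n,Tx_n\rangle\}$ equals $0$.
   Context: $\mathbb{B}(\mathbb{H})$ carries the operator norm; $S_{\mathbb{H}}$ is the unit sphere; $M_T=\{x\in S_{\mathbb{H}}:\|Tx\|=\|T\|\}$. A nonzero element $x$ of a normed space $\mathbb{Z}$ is smooth if there is a unique $f\in\mathbb{Z}^*$ with $\|f\|=1$, $f(x)=\|x\|$. $S\perp_B A$ means $\|S+\lambda A\|\ge\|S\|$ for all real $\lambda$. A norming sequence for $T$ is $\{x_n\}\subseteq S_{\mathbb{H}}$ with $\|Tx_n\|\to\|T\|$. *)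

From Stdlib Require Import Reals Lra ClassicalEpsilon.
Open Scope R_scope.

Record RHilbert := {
  carrier :> Type;
  vzero : carrier;
  vadd : carrier -> carrier -> carrier;
  vopp : carrier -> carrier;
  vscal : R -> carrier -> carrier;
  inner : carrier -> carrier -> R;
  vadd_assoc : forall x y z, vadd x (vadd y z) = vadd (vadd x y) z;
  vadd_comm : forall x y, vadd x y = vadd y x;
  vadd_0 : forall x, vadd x vzero = x;
  vadd_opp : forall x, vadd x (vopp x) = vzero;
  vscal_1 : forall x, vscal 1 x = x;
  vscal_assoc : forall a b x, vscal a (vscal b x) = vscal (a * b) x;
  vscal_distr_R : forall a b x, vscal (a + b) x = vadd (vscal a x) (vscal b x);
  vscal_distr_V : forall a x y, vscal a (vadd x y) = vadd (vscal a x) (vscal a y);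
  inner_sym : forall x y, inner x y = inner y x;
  inner_add_l : forall x y z, inner (vadd x y) z = inner x z + inner y z;
  inner_scal_l : forall a x y, inner (vscal a x) y = a * inner x y;
  inner_pos : forall x, 0 <= inner x x;
  inner_def : forall x, inner x x = 0 -> x = vzero;
  complete : forall u : nat -> carrier,
    (forall eps, eps > 0 -> exists N, forall m n, (m >= N)%nat -> (n >= N)%nat ->
        sqrt (inner (vadd (u m) (vopp (u n))) (vadd (u m) (vopp (u n)))) < eps) ->
    exists l, forall eps, eps > 0 -> exists N, forall n, (n >= N)%nat ->
        sqrt (inner (vadd (u n) (vopp l)) (vadd (u n) (vopp l))) < eps
}.

Arguments vzero {_}.
Arguments vadd {_} _ _.
Arguments vopp {_} _.
Arguments vscal {_} _ _.
Arguments inner {_} _ _.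

Definition nrm {H : RHilbert} (x : H) : R := sqrt (inner x x).

Definition is_linear {H : RHilbert} (A : H -> H) : Prop :=
  (forall x y, A (vadd x y) = vadd (A x) (A y)) /\
  (forall a x, A (vscal a x) = vscal a (A x)).

Definition is_bounded {H : RHilbert} (A : H -> H) : Prop :=
  exists c, forall x, nrm (A x) <= c * nrm x.

Definition BL {H : RHilbert} (A : H -> H) : Prop := is_linear A /\ is_bounded A.

Definition op_add {H : RHilbert} (A B : H -> H) : H -> H := fun x => vadd (A x) (B x).
Definition op_scal {H : RHilbert} (a : R) (A : H -> H) : H -> H := fun x => vscal a (A x).

(** sup { ||A x|| : x in P, ||x|| <= 1 } (chosen as the least upper bound,
    which exists for bounded A and P containing 0). *)
Definition opnorm_on {H : RHilbert} (A : H -> H) (P : H -> Prop) : R :=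
  epsilon (inhabits 0)
    (fun c => is_lub (fun r => exists x, P x /\ nrm x <= 1 /\ r = nrm (A x)) c).

Definition opnorm {H : RHilbert} (A : H -> H) : R := opnorm_on A (fun _ => True).

Definition orth {H : RHilbert} (x0 : H) : H -> Prop := fun x => inner x x0 = 0.

Definition M_set {H : RHilbert} (T : H -> H) : H -> Prop :=
  fun x => nrm x = 1 /\ nrm (T x) = opnorm T.

(** f is an element of B(H)^* of norm 1 with f(T) = ||T||
    (functionals are functions on H -> H; only their values on B(H) matter). *)
Definition support_functional {H : RHilbert} (T : H -> H) (f : (H -> H) -> R) : Prop :=
  (forall A B, BL A -> BL B -> f (op_add A B) = f A + f B) /\
  (forall a A, BL A -> f (op_scal a A) = a * f A) /\
  is_lub (fun r => exists A, BL A /\ opnorm A <= 1 /\ r = Rabs (f A)) 1 /\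
  f T = opnorm T.

Definition smooth_point {H : RHilbert} (T : H -> H) : Prop :=
  exists f, support_functional T f /\
    forall g, support_functional T g -> forall A, BL A -> g A = f A.

Definition BJ_orth {H : RHilbert} (S A : H -> H) : Prop :=
  forall lam : R, opnorm (op_add S (op_scal lam A)) >= opnorm S.

Definition norming_seq {H : RHilbert} (T : H -> H) (xs : nat -> H) : Prop :=
  (forall n, nrm (xs n) = 1) /\ Un_cv (fun n => nrm (T (xs n))) (opnorm T).

Definition subseq_limit (a : nat -> R) (l : R) : Prop :=
  exists phi : nat -> nat, (forall n, (phi n < phi (S n))%nat) /\
    Un_cv (fun n => a (phi n)) l.

(* If [T] attains its norm only at [±x0] and [‖T‖] exceeds the norm of [T] on [x0^⊥], then
   ‖T + λA‖² = ‖T‖² + 2λ⟨Ax0, Tx0⟩ + O(λ²).  Hence every support functional at [T] is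
   [A ↦ ⟨Ax0, Tx0⟩ / ‖T‖], [T ⊥_B A] iff [⟨Ax0, Tx0⟩ = 0], and [⟨Axn, Txn⟩ → ⟨Ax0, Tx0⟩] along
   every norming sequence, which gives (i) and (iii).
   If (ii) fails, there are an operator [A] and two norming sequences along which [⟨Ax, Tx⟩]
   tends to [0] and to some [L ≠ 0]: [A] has rank one when there are two independent maximizers
   or no gap, and when there is no maximizer, [A = T ∘ P] with [P] the projection onto every
   other vector of an orthonormal sequence of near-maximizers (completeness of [H] is what
   provides near-maximizers orthogonal to any finitely many vectors).  Ultrafilter limits along
   the two sequences are two different support functionals, so (i) fails; the first sequence
   shows [T ⊥_B A] while the second violates (iii). *)

From Stdlib Require Import Reals Lra Psatz ClassicalEpsilon Classical Lia Arith List.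
From mathcomp Require filter.
Open Scope R_scope.

Arguments vadd_assoc {_} _ _ _.
Arguments vadd_comm {_} _ _.
Arguments vadd_0 {_} _.
Arguments vadd_opp {_} _.
Arguments vscal_1 {_} _.
Arguments vscal_assoc {_} _ _ _.
Arguments vscal_distr_R {_} _ _ _.
Arguments vscal_distr_V {_} _ _ _.
Arguments inner_sym {_} _ _.
Arguments inner_add_l {_} _ _ _.
Arguments inner_scal_l {_} _ _ _.
Arguments inner_pos {_} _.
Arguments inner_def {_} _ _.
Arguments complete {_} _ _.

Lemma le_of_sqr_le (a b : R) : 0 <= b -> a * a <= b * b -> a <= b.
Proof. intros; nra. Qed.

Lemma abs_le_of_sqr_le (a b : R) : 0 <= b -> a * a <= b * b -> Rabs a <= b.
Proof. intros. apply le_of_sqr_le; auto. rewrite <- Rabs_mult, Rabs_right; nra. Qed.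

Lemma eq_of_abs_lt (a b : R) : (forall eps, eps > 0 -> Rabs (a - b) < eps) -> a = b.
Proof.
  intro h. destruct (Req_dec a b) as [e|e]; auto. exfalso.
  assert (hp : Rabs (a - b) > 0) by (apply Rabs_pos_lt; lra). specialize (h _ hp). lra.
Qed.

Lemma discriminant_le (a b c : R) :
  0 <= c -> (forall t, 0 <= a + 2 * t * b + t * t * c) -> b * b <= a * c.
Proof.
  intros hc ht. pose proof (ht 0) as ha.
  destruct (Rle_lt_or_eq_dec 0 c hc) as [hc0|<-].
  - specialize (ht (- b / c)).
    replace (a + 2 * (- b / c) * b + - b / c * (- b / c) * c) with (a - b * b / c) in ht
      by (field; lra).
    apply Rmult_le_reg_r with (/ c); [apply Rinv_0_lt_compat; lra|].
    replace (a * c * / c) with a by (field; lra). unfold Rdiv in ht. lra.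
  - destruct (Req_dec b 0) as [->|hb]; [nra|].
    specialize (ht (- (a + 1) / (2 * b))).
    replace (a + 2 * (- (a + 1) / (2 * b)) * b + - (a + 1) / (2 * b) * (- (a + 1) / (2 * b)) * 0)
      with (- 1) in ht by (field; lra). lra.
Qed.

Section VectorAlgebra.
Context {H : RHilbert}.
Implicit Types x y z : H.

Definition vsub x y : H := vadd x (vopp y).

Lemma vadd_0l x : vadd vzero x = x.
Proof. rewrite vadd_comm. apply vadd_0. Qed.

Lemma vadd_cancel_l x y z : vadd x y = vadd x z -> y = z.
Proof.
  intro e. assert (e2 : vadd (vopp x) (vadd x y) = vadd (vopp x) (vadd x z)) by now rewrite e.
  rewrite !vadd_assoc, (vadd_comm (vopp x) x), vadd_opp, !vadd_0l in e2. exact e2.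
Qed.

Lemma vscal_0l x : vscal 0 x = vzero.
Proof.
  apply (vadd_cancel_l (vscal 0 x)). rewrite vadd_0, <- vscal_distr_R. f_equal. ring.
Qed.

Lemma vopp_scal x : vopp x = vscal (-1) x.
Proof.
  apply (vadd_cancel_l x). rewrite vadd_opp. rewrite <- (vscal_1 x) at 1.
  rewrite <- vscal_distr_R. replace (1 + -1) with 0 by ring. symmetry; apply vscal_0l.
Qed.

Lemma vsub_add x y : vadd (vsub x y) y = x.
Proof. unfold vsub. rewrite <- vadd_assoc, (vadd_comm (vopp y) y), vadd_opp, vadd_0. reflexivity. Qed.

Lemma vsub_eq0 x y : vsub x y = vzero -> x = y.
Proof. intro h. rewrite <- (vsub_add x y), h. apply vadd_0l. Qed.

Lemma vsub_self x : vsub x x = vzero.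
Proof. apply vadd_opp. Qed.

Lemma inner_add_r x y z : inner x (vadd y z) = inner x y + inner x z.
Proof. rewrite inner_sym, inner_add_l, (inner_sym y), (inner_sym z). reflexivity. Qed.

Lemma inner_scal_r a x y : inner x (vscal a y) = a * inner x y.
Proof. rewrite inner_sym, inner_scal_l, inner_sym. reflexivity. Qed.

Lemma inner_0_l y : inner vzero y = 0.
Proof. rewrite <- (vscal_0l vzero), inner_scal_l. ring. Qed.

Lemma inner_0_r y : inner y vzero = 0.
Proof. rewrite inner_sym. apply inner_0_l. Qed.

Lemma inner_opp_l x y : inner (vopp x) y = - inner x y.
Proof. rewrite vopp_scal, inner_scal_l. ring. Qed.

Lemma inner_opp_r x y : inner x (vopp y) = - inner x y.
Proof. rewrite vopp_scal, inner_scal_r. ring. Qed.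

Lemma inner_sub_l x y z : inner (vsub x y) z = inner x z - inner y z.
Proof. unfold vsub. rewrite inner_add_l, inner_opp_l. ring. Qed.

Lemma inner_sub_r x y z : inner z (vsub x y) = inner z x - inner z y.
Proof. unfold vsub. rewrite inner_add_r, inner_opp_r. ring. Qed.

Lemma vec_ext x y : (forall z, inner x z = inner y z) -> x = y.
Proof. intro h. apply vsub_eq0, inner_def. rewrite inner_sub_l, h. ring. Qed.

End VectorAlgebra.


Ltac inner_simpl := repeat (rewrite ?inner_add_l, ?inner_add_r, ?inner_scal_l, ?inner_scal_r,
   ?inner_sub_l, ?inner_sub_r, ?inner_opp_l, ?inner_opp_r, ?inner_0_l, ?inner_0_r).

Lemma form_cauchy_schwarz {H : RHilbert} (B : H -> H -> R)
  (Badd : forall x y z, B (vadd x y) z = B x z + B y z)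
  (Bscal : forall a x y, B (vscal a x) y = a * B x y)
  (Bsym : forall x y, B x y = B y x)
  (Bpos : forall x, 0 <= B x x) :
  forall x y, B x y * B x y <= B x x * B y y.
Proof.
  intros x y. rewrite (Rmult_comm (B x x)). apply discriminant_le; [apply Bpos|]. intro t.
  assert (Baddr : forall u v w, B w (vadd u v) = B w u + B w v)
    by (intros; rewrite Bsym, Badd, !(Bsym _ w); reflexivity).
  assert (Bscalr : forall a u v, B v (vscal a u) = a * B v u)
    by (intros; rewrite Bsym, Bscal, Bsym; reflexivity).
  pose proof (Bpos (vadd y (vscal t x))) as h.
  rewrite Badd, !Baddr, !Bscalr, !Bscal, (Bsym y x) in h. lra.
Qed.

Section Norm.
Context {H : RHilbert}.
Implicit Types x y : H.

Lemma inner_cauchy_schwarz x y : inner x y * inner x y <= inner x x * inner y y.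
Proof.
  apply form_cauchy_schwarz;
    [apply inner_add_l | apply inner_scal_l | apply inner_sym | apply inner_pos].
Qed.

Lemma nrm_ge0 x : 0 <= nrm x.
Proof. apply sqrt_pos. Qed.

Lemma nrm_sqr x : nrm x * nrm x = inner x x.
Proof. apply sqrt_sqrt, inner_pos. Qed.

Lemma nrm_zero : nrm (@vzero H) = 0.
Proof. unfold nrm. rewrite inner_0_l. apply sqrt_0. Qed.

Lemma nrm_eq0 x : nrm x = 0 -> x = vzero.
Proof. intro h. apply inner_def. rewrite <- nrm_sqr, h. ring. Qed.

Lemma nrm_scal a x : nrm (vscal a x) = Rabs a * nrm x.
Proof.
  unfold nrm. rewrite inner_scal_l, inner_scal_r, <- Rmult_assoc, sqrt_mult_alt by nra.
  f_equal. apply sqrt_Rsqr_abs.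
Qed.

Lemma nrm_opp x : nrm (vopp x) = nrm x.
Proof. rewrite vopp_scal, nrm_scal, Rabs_left by lra. ring. Qed.

Lemma inner_abs_le x y : Rabs (inner x y) <= nrm x * nrm y.
Proof.
  apply abs_le_of_sqr_le; [apply Rmult_le_pos; apply nrm_ge0|].
  replace (nrm x * nrm y * (nrm x * nrm y)) with ((nrm x * nrm x) * (nrm y * nrm y)) by ring.
  rewrite !nrm_sqr. apply inner_cauchy_schwarz.
Qed.

Lemma inner_le x y : inner x y <= nrm x * nrm y.
Proof. eapply Rle_trans; [apply Rle_abs | apply inner_abs_le]. Qed.

Lemma nrm_le_of_sqr x c : 0 <= c -> inner x x <= c * c -> nrm x <= c.
Proof. intros. apply le_of_sqr_le; auto. rewrite nrm_sqr. auto. Qed.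

Lemma nrm_triangle x y : nrm (vadd x y) <= nrm x + nrm y.
Proof.
  apply nrm_le_of_sqr; [pose proof (nrm_ge0 x); pose proof (nrm_ge0 y); lra|].
  inner_simpl. rewrite (inner_sym y x). pose proof (inner_le x y).
  pose proof (nrm_sqr x). pose proof (nrm_sqr y). nra.
Qed.

Lemma nrm_sub_sym x y : nrm (vsub x y) = nrm (vsub y x).
Proof. unfold nrm. f_equal. inner_simpl. rewrite (inner_sym x y). ring. Qed.

Lemma nrm_sub_ge x y : nrm x - nrm y <= nrm (vsub x y).
Proof. pose proof (nrm_triangle (vsub x y) y) as h. rewrite vsub_add in h. lra. Qed.

Lemma nrm_sub_abs_le x y : Rabs (nrm x - nrm y) <= nrm (vsub x y).
Proof.
  apply Rabs_le. pose proof (nrm_sub_ge x y). pose proof (nrm_sub_ge y x) as h.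
  rewrite nrm_sub_sym in h. lra.
Qed.

End Norm.

Section Operators.
Context {H : RHilbert}.
Implicit Types (A B T : H -> H) (P : H -> Prop) (x y : H).

Lemma linear_zero A : is_linear A -> A vzero = vzero.
Proof. intros [_ hs]. rewrite <- (vscal_0l vzero), hs, !vscal_0l. reflexivity. Qed.

Lemma linear_opp A x : is_linear A -> A (vopp x) = vopp (A x).
Proof. intros [_ hs]. rewrite !vopp_scal, hs. reflexivity. Qed.

Lemma linear_sub A x y : is_linear A -> A (vsub x y) = vsub (A x) (A y).
Proof. intros hl. unfold vsub. rewrite (proj1 hl), linear_opp; auto. Qed.

Lemma bound_of_unit_bound A P q : is_linear A -> (forall a x, P x -> P (vscal a x)) ->
  (forall x, P x -> nrm x = 1 -> nrm (A x) <= q) -> forall x, P x -> nrm (A x) <= q * nrm x.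
Proof.
  intros hA hP hq x hx. destruct (Req_dec (nrm x) 0) as [e|e].
  { rewrite (nrm_eq0 x e), linear_zero, nrm_zero by auto. lra. }
  pose proof (nrm_ge0 x) as hx0. assert (hinv : 0 < / nrm x) by (apply Rinv_0_lt_compat; lra).
  specialize (hq _ (hP (/ nrm x) x hx)).
  rewrite (proj2 hA), !nrm_scal, Rabs_right, Rinv_l in hq by lra.
  apply Rmult_le_reg_l with (/ nrm x); auto.
  replace (/ nrm x * (q * nrm x)) with q by (field; lra). auto.
Qed.

Lemma opnorm_on_lub A P : BL A -> P vzero ->
  is_lub (fun r => exists x, P x /\ nrm x <= 1 /\ r = nrm (A x)) (opnorm_on A P).
Proof.
  intros [hl [c hc]] h0. unfold opnorm_on. apply epsilon_spec.
  destruct (completeness (fun r => exists x, P x /\ nrm x <= 1 /\ r = nrm (A x))) as [m hm].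
  - exists (Rabs c). intros r [x [_ [hx ->]]]. eapply Rle_trans; [apply hc|].
    pose proof (nrm_ge0 x). pose proof (Rle_abs c). pose proof (Rabs_pos c). nra.
  - exists (nrm (A vzero)), vzero. rewrite nrm_zero. repeat split; auto; lra.
  - exists m. exact hm.
Qed.

Lemma opnorm_on_ge A P x : BL A -> P vzero -> P x -> nrm x <= 1 -> nrm (A x) <= opnorm_on A P.
Proof. intros hA h0 hx h1. apply (proj1 (opnorm_on_lub A P hA h0)). exists x. auto. Qed.

Lemma opnorm_on_le A P c : BL A -> P vzero ->
  (forall x, P x -> nrm x <= 1 -> nrm (A x) <= c) -> opnorm_on A P <= c.
Proof.
  intros hA h0 hc. apply (proj2 (opnorm_on_lub A P hA h0)). intros r [x [hx [h1 ->]]]. auto.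
Qed.

Lemma opnorm_on_ge0 A P : BL A -> P vzero -> 0 <= opnorm_on A P.
Proof.
  intros hA h0. pose proof (nrm_ge0 (A vzero)).
  pose proof (opnorm_on_ge A P vzero hA h0 h0 ltac:(rewrite nrm_zero; lra)). lra.
Qed.

Lemma opnorm_on_approx A P eps : BL A -> P vzero -> eps > 0 ->
  exists x, P x /\ nrm x <= 1 /\ opnorm_on A P - eps < nrm (A x).
Proof.
  intros hA h0 he. apply NNPP. intro h.
  enough (opnorm_on A P <= opnorm_on A P - eps) by lra.
  apply opnorm_on_le; auto. intros x hx h1. apply Rnot_lt_le. intro hlt. apply h; eauto.
Qed.

Lemma opnorm_on_bound A P x : BL A -> P vzero -> (forall a y, P y -> P (vscal a y)) -> P x ->
  nrm (A x) <= opnorm_on A P * nrm x.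
Proof.
  intros hA h0 hs. apply bound_of_unit_bound; auto; [apply hA|].
  intros y hy h1. apply opnorm_on_ge; auto. lra.
Qed.

Lemma opnorm_ge A x : BL A -> nrm x <= 1 -> nrm (A x) <= opnorm A.
Proof. intros. apply opnorm_on_ge; auto. Qed.

Lemma opnorm_le A c : BL A -> (forall x, nrm x <= 1 -> nrm (A x) <= c) -> opnorm A <= c.
Proof. intros. apply opnorm_on_le; auto. Qed.

Lemma opnorm_ge0 A : BL A -> 0 <= opnorm A.
Proof. intros. apply opnorm_on_ge0; auto. Qed.

Lemma opnorm_bound A x : BL A -> nrm (A x) <= opnorm A * nrm x.
Proof. intros. apply opnorm_on_bound; auto. Qed.

Lemma opnorm_gt0 T : BL T -> ~ (forall x, T x = vzero) -> 0 < opnorm T.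
Proof.
  intros hT hne. apply Rnot_le_lt. intro h. apply hne. intro x. apply nrm_eq0.
  pose proof (opnorm_bound T x hT). pose proof (nrm_ge0 x). pose proof (nrm_ge0 (T x)).
  pose proof (opnorm_ge0 T hT). nra.
Qed.

Lemma BL_add A B : BL A -> BL B -> BL (op_add A B).
Proof.
  intros hA hB. unfold op_add. split; [split|].
  - intros x y. rewrite (proj1 (proj1 hA)), (proj1 (proj1 hB)), <- !vadd_assoc. f_equal.
    rewrite !vadd_assoc. f_equal. apply vadd_comm.
  - intros a x. rewrite (proj2 (proj1 hA)), (proj2 (proj1 hB)). symmetry. apply vscal_distr_V.
  - exists (opnorm A + opnorm B). intro x. eapply Rle_trans; [apply nrm_triangle|].
    pose proof (opnorm_bound A x hA). pose proof (opnorm_bound B x hB). lra.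
Qed.

Lemma BL_scal c A : BL A -> BL (op_scal c A).
Proof.
  intros hA. unfold op_scal. split; [split|].
  - intros x y. rewrite (proj1 (proj1 hA)). apply vscal_distr_V.
  - intros a x. rewrite (proj2 (proj1 hA)), !vscal_assoc. f_equal. ring.
  - exists (Rabs c * opnorm A). intro x. rewrite nrm_scal, Rmult_assoc.
    apply Rmult_le_compat_l; [apply Rabs_pos | apply opnorm_bound; auto].
Qed.

Lemma BL_add_scal T A lam : BL T -> BL A -> BL (op_add T (op_scal lam A)).
Proof. intros. apply BL_add; auto. apply BL_scal; auto. Qed.

Lemma BL_rank_one (u v : H) : BL (fun z => vscal (inner z u) v).
Proof.
  split; [split|].
  - intros x y. rewrite inner_add_l. apply vscal_distr_R.
  - intros a x. rewrite inner_scal_l, vscal_assoc. reflexivity.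
  - exists (nrm u * nrm v). intro x. rewrite nrm_scal.
    pose proof (inner_abs_le x u). pose proof (nrm_ge0 v). pose proof (nrm_ge0 u).
    pose proof (nrm_ge0 x). nra.
Qed.

Lemma BL_comp A B : BL A -> BL B -> BL (fun z => A (B z)).
Proof.
  intros hA hB. split; [split|].
  - intros x y. rewrite (proj1 (proj1 hB)), (proj1 (proj1 hA)). reflexivity.
  - intros a x. rewrite (proj2 (proj1 hB)), (proj2 (proj1 hA)). reflexivity.
  - exists (opnorm A * opnorm B). intro x. eapply Rle_trans; [apply opnorm_bound; auto|].
    rewrite Rmult_assoc. apply Rmult_le_compat_l; [apply opnorm_ge0 | apply opnorm_bound]; auto.
Qed.

Lemma opnorm_scal_inv_le B k : BL B -> 0 < k -> opnorm B <= k -> opnorm (op_scal (/ k) B) <= 1.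
Proof.
  intros hB hk hle. apply opnorm_le; [apply BL_scal; auto|]. intros x hx. unfold op_scal.
  rewrite nrm_scal, Rabs_right by (left; apply Rinv_0_lt_compat; auto).
  pose proof (opnorm_bound B x hB). pose proof (nrm_ge0 x). pose proof (opnorm_ge0 B hB).
  apply Rmult_le_reg_l with k; auto. rewrite <- Rmult_assoc, Rinv_r by lra. nra.
Qed.

End Operators.

Lemma subseq_index_ge (phi : nat -> nat) :
  (forall n, (phi n < phi (S n))%nat) -> forall n, (n <= phi n)%nat.
Proof. intros h n. induction n; [lia|]. specialize (h n). lia. Qed.

Lemma Un_cv_subseq (u : nat -> R) l (phi : nat -> nat) :
  (forall n, (phi n < phi (S n))%nat) -> Un_cv u l -> Un_cv (fun n => u (phi n)) l.
Proof.
  intros hp hu eps he. destruct (hu eps he) as [N hN]. exists N. intros n hn. apply hN.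
  pose proof (subseq_index_ge phi hp n). lia.
Qed.

Lemma Un_cv_const (c : R) : Un_cv (fun _ => c) c.
Proof. intros eps he. exists O. intros. unfold R_dist. rewrite Rminus_diag, Rabs_R0. lra. Qed.

Lemma Un_cv_ext (a b : nat -> R) l : (forall n, a n = b n) -> Un_cv a l -> Un_cv b l.
Proof. intros he h eps hx. destruct (h eps hx) as [n0 hn]. exists n0. intros n hn2. rewrite <- he. auto. Qed.

Lemma Un_cv_le (a : nat -> R) l c : (forall n, a n <= c) -> Un_cv a l -> l <= c.
Proof.
  intros hb hcv. apply Rnot_lt_le. intro h.
  destruct (hcv (l - c) ltac:(lra)) as [n0 hn]. specialize (hn n0 (le_n _)). specialize (hb n0).
  unfold R_dist in hn. apply Rabs_def2 in hn. lra.
Qed.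

Lemma inv_INR_lt (eps : R) : eps > 0 -> exists n0, forall n, (n >= n0)%nat -> / (INR n + 1) < eps.
Proof.
  intros he. destruct (INR_unbounded (/ eps)) as [n0 hn0]. exists n0. intros n hn.
  assert (INR n0 <= INR n) by (apply le_INR; lia). pose proof (pos_INR n).
  pose proof (Rinv_0_lt_compat eps he).
  rewrite <- (Rinv_inv eps). apply Rinv_lt_contravar; [apply Rmult_lt_0_compat|]; lra.
Qed.

Section Sequences.
Context {H : RHilbert}.

Definition vlim (s : nat -> H) (l : H) : Prop :=
  forall eps, eps > 0 -> exists n0, forall n, (n >= n0)%nat -> nrm (vsub (s n) l) < eps.

Lemma complete_vlim (s : nat -> H) :
  (forall eps, eps > 0 -> exists n0, forall m n, (m >= n0)%nat -> (n >= n0)%nat ->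
     nrm (vsub (s m) (s n)) < eps) -> exists l, vlim s l.
Proof. apply complete. Qed.

Lemma vlim_unique (s : nat -> H) l1 l2 : vlim s l1 -> vlim s l2 -> l1 = l2.
Proof.
  intros h1 h2. apply vsub_eq0, nrm_eq0. symmetry. apply eq_of_abs_lt. intros eps he.
  destruct (h1 (eps / 2) ltac:(lra)) as [n1 hn1]. destruct (h2 (eps / 2) ltac:(lra)) as [n2 hn2].
  specialize (hn1 (Nat.max n1 n2) ltac:(lia)). specialize (hn2 (Nat.max n1 n2) ltac:(lia)).
  set (m := s (Nat.max n1 n2)) in *.
  assert (e : vsub l1 l2 = vadd (vsub m l2) (vsub l1 m)) by (apply vec_ext; intro z; inner_simpl; ring).
  rewrite e, Rminus_0_l, Rabs_Ropp, Rabs_right by (apply Rle_ge, nrm_ge0).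
  eapply Rle_lt_trans; [apply nrm_triangle|]. rewrite (nrm_sub_sym l1 m). lra.
Qed.

Lemma vlim_add (s t : nat -> H) l m :
  vlim s l -> vlim t m -> vlim (fun n => vadd (s n) (t n)) (vadd l m).
Proof.
  intros h1 h2 eps he. destruct (h1 (eps / 2) ltac:(lra)) as [n1 hn1].
  destruct (h2 (eps / 2) ltac:(lra)) as [n2 hn2].
  exists (Nat.max n1 n2). intros n hn. specialize (hn1 n ltac:(lia)). specialize (hn2 n ltac:(lia)).
  assert (e : vsub (vadd (s n) (t n)) (vadd l m) = vadd (vsub (s n) l) (vsub (t n) m))
    by (apply vec_ext; intro z; inner_simpl; ring).
  rewrite e. eapply Rle_lt_trans; [apply nrm_triangle|]. lra.
Qed.

Lemma vlim_scal (s : nat -> H) l a : vlim s l -> vlim (fun n => vscal a (s n)) (vscal a l).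
Proof.
  intros h eps he. pose proof (Rabs_pos a).
  destruct (h (eps / (Rabs a + 1))) as [n0 hn0]; [apply Rdiv_lt_0_compat; lra|].
  exists n0. intros n hn. specialize (hn0 n hn).
  assert (e : vsub (vscal a (s n)) (vscal a l) = vscal a (vsub (s n) l))
    by (apply vec_ext; intro z; inner_simpl; ring).
  rewrite e, nrm_scal. pose proof (nrm_ge0 (vsub (s n) l)).
  apply Rle_lt_trans with ((Rabs a + 1) * nrm (vsub (s n) l)); [nra|].
  apply Rmult_lt_reg_l with (/ (Rabs a + 1)); [apply Rinv_0_lt_compat; lra|].
  rewrite <- Rmult_assoc, Rinv_l, Rmult_1_l by lra.
  replace (/ (Rabs a + 1) * eps) with (eps / (Rabs a + 1)) by (field; lra). lra.
Qed.

Lemma vlim_eventually_const (s : nat -> H) c :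
  (exists n0, forall n, (n >= n0)%nat -> s n = c) -> vlim s c.
Proof.
  intros [n0 hn] eps he. exists n0. intros n h. rewrite hn, vsub_self, nrm_zero by auto. lra.
Qed.

Lemma vlim_nrm_le (s : nat -> H) l c : vlim s l -> (forall n, nrm (s n) <= c) -> nrm l <= c.
Proof.
  intros h hb. apply Rnot_lt_le. intro hlt.
  destruct (h (nrm l - c) ltac:(lra)) as [n0 hn]. specialize (hn n0 (le_n _)). specialize (hb n0).
  pose proof (nrm_sub_ge l (s n0)) as h'. rewrite nrm_sub_sym in h'. lra.
Qed.

End Sequences.

Section Defect.
Context {H : RHilbert} (T : H -> H) (hT : BL T).
Implicit Types x y : H.

(* A positive semidefinite form; on unit vectors [defect x x = ‖T‖² - ‖T x‖²]. *)
Definition defect x y : R := opnorm T * opnorm T * inner x y - inner (T x) (T y).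

Lemma defect_add_l x y z : defect (vadd x y) z = defect x z + defect y z.
Proof. unfold defect. rewrite (proj1 (proj1 hT)). inner_simpl. ring. Qed.

Lemma defect_scal_l a x y : defect (vscal a x) y = a * defect x y.
Proof. unfold defect. rewrite (proj2 (proj1 hT)). inner_simpl. ring. Qed.

Lemma defect_sym x y : defect x y = defect y x.
Proof. unfold defect. rewrite (inner_sym x y), (inner_sym (T x)). reflexivity. Qed.

Lemma defect_ge0 x : 0 <= defect x x.
Proof.
  unfold defect. rewrite <- !nrm_sqr. pose proof (opnorm_bound T x hT).
  pose proof (nrm_ge0 (T x)). pose proof (nrm_ge0 x). pose proof (opnorm_ge0 T hT). nra.
Qed.

Lemma defect_cauchy_schwarz x y : defect x y * defect x y <= defect x x * defect y y.
Proof.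
  apply form_cauchy_schwarz;
    [apply defect_add_l | apply defect_scal_l | apply defect_sym | apply defect_ge0].
Qed.

Lemma defect_unit x : nrm x = 1 -> defect x x = opnorm T * opnorm T - nrm (T x) * nrm (T x).
Proof. intros h. unfold defect. rewrite <- !nrm_sqr, h. ring. Qed.

Lemma maximizer_orth x0 h : M_set T x0 -> inner h x0 = 0 -> inner (T x0) (T h) = 0.
Proof.
  intros [h1 h2] h3. pose proof (defect_cauchy_schwarz x0 h) as c.
  rewrite defect_unit, h2, Rminus_diag, Rmult_0_l in c by auto.
  assert (e : defect x0 h = 0) by nra.
  unfold defect in e. rewrite inner_sym, h3 in e. lra.
Qed.

Definition sdefect x : R := sqrt (defect x x).

Lemma sdefect_ge0 x : 0 <= sdefect x.
Proof. apply sqrt_pos. Qed.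

Lemma sdefect_sqr x : sdefect x * sdefect x = defect x x.
Proof. apply sqrt_sqrt, defect_ge0. Qed.

Lemma sdefect_triangle x y : sdefect (vadd x y) <= sdefect x + sdefect y.
Proof.
  apply le_of_sqr_le; [pose proof (sdefect_ge0 x); pose proof (sdefect_ge0 y); lra|].
  rewrite sdefect_sqr, defect_add_l, !(defect_sym _ (vadd x y)), !defect_add_l, (defect_sym y x).
  pose proof (sdefect_sqr x). pose proof (sdefect_sqr y).
  enough (defect x y <= sdefect x * sdefect y) by nra.
  apply le_of_sqr_le; [apply Rmult_le_pos; apply sdefect_ge0|].
  replace (sdefect x * sdefect y * (sdefect x * sdefect y))
    with (sdefect x * sdefect x * (sdefect y * sdefect y)) by ring.
  rewrite !sdefect_sqr. apply defect_cauchy_schwarz.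
Qed.

Lemma sdefect_scal a x : sdefect (vscal a x) = Rabs a * sdefect x.
Proof.
  unfold sdefect. rewrite defect_scal_l, defect_sym, defect_scal_l, <- Rmult_assoc.
  rewrite sqrt_mult_alt by nra. f_equal. apply sqrt_Rsqr_abs.
Qed.

Lemma sdefect_sub_le x y : sdefect (vsub x y) <= sdefect x + sdefect y.
Proof.
  unfold vsub. eapply Rle_trans; [apply sdefect_triangle|].
  rewrite vopp_scal, sdefect_scal, Rabs_left by lra. lra.
Qed.

Lemma sdefect_le x : sdefect x <= opnorm T * nrm x.
Proof.
  apply le_of_sqr_le; [pose proof (opnorm_ge0 T hT); pose proof (nrm_ge0 x); nra|].
  rewrite sdefect_sqr. unfold defect. rewrite <- (nrm_sqr x). pose proof (inner_pos (T x)). nra.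
Qed.

End Defect.

Lemma orth_vzero {H : RHilbert} (x0 : H) : orth x0 vzero.
Proof. apply inner_0_l. Qed.

Lemma orth_scal {H : RHilbert} (x0 : H) a y : orth x0 y -> orth x0 (vscal a y).
Proof. unfold orth. intro h. rewrite inner_scal_l, h. ring. Qed.

Section Maximizers.
Context {H : RHilbert} (T : H -> H) (hT : BL T).
Implicit Types (x y : H) (w : nat -> H).

Lemma M_set_opp x : M_set T x -> M_set T (vopp x).
Proof. intros [h1 h2]. split; [rewrite nrm_opp; auto|]. rewrite linear_opp, nrm_opp; auto. apply hT. Qed.

Lemma unit_normalize y : 0 < nrm (T y) -> nrm y <= 1 ->
  nrm (vscal (/ nrm y) y) = 1 /\ nrm (T y) <= nrm (T (vscal (/ nrm y) y)).
Proof.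
  intros h2 h1. assert (hy : 0 < nrm y).
  { destruct (Rle_lt_or_eq_dec 0 (nrm y) (nrm_ge0 y)) as [h|h]; auto.
    exfalso. rewrite (nrm_eq0 y (eq_sym h)), linear_zero, nrm_zero in h2 by apply hT. lra. }
  rewrite (proj2 (proj1 hT)), !nrm_scal, Rabs_right by (left; apply Rinv_0_lt_compat; auto).
  split; [field; lra|].
  apply Rmult_le_reg_l with (nrm y); auto. rewrite <- Rmult_assoc, Rinv_r, Rmult_1_l by lra.
  pose proof (nrm_ge0 (T y)). nra.
Qed.

Lemma unit_near_maximizer_on P eps : P vzero -> (forall a x, P x -> P (vscal a x)) ->
  0 < eps < opnorm_on T P -> exists x, P x /\ nrm x = 1 /\ opnorm_on T P - eps < nrm (T x).
Proof.
  intros h0 hs he. destruct (opnorm_on_approx T P eps hT h0 ltac:(lra)) as [y [hy [hy1 hy2]]].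
  destruct (unit_normalize y ltac:(lra) hy1) as [n1 n2].
  exists (vscal (/ nrm y) y). repeat split; auto. lra.
Qed.

Lemma norming_le w n : norming_seq T w -> nrm (T (w n)) <= opnorm T.
Proof. intros [hu _]. rewrite <- (Rmult_1_r (opnorm T)), <- (hu n). apply opnorm_bound; auto. Qed.

Lemma norming_inner_bound B w : BL B -> norming_seq T w ->
  forall n, Rabs (inner (B (w n)) (T (w n))) <= opnorm B * opnorm T.
Proof.
  intros hB hw n. eapply Rle_trans; [apply inner_abs_le|].
  pose proof (opnorm_bound B (w n) hB) as hBw. rewrite (proj1 hw n) in hBw.
  pose proof (norming_le w n hw). pose proof (nrm_ge0 (B (w n))).
  pose proof (nrm_ge0 (T (w n))). pose proof (opnorm_ge0 B hB). nra.
Qed.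

Lemma norming_sqr_cv w : norming_seq T w ->
  Un_cv (fun n => inner (T (w n)) (T (w n))) (opnorm T * opnorm T).
Proof.
  intros [_ hcv]. apply (Un_cv_ext (fun n => nrm (T (w n)) * nrm (T (w n)))).
  { intro n. apply nrm_sqr. }
  apply CV_mult; auto.
Qed.

Lemma norming_sdefect_small w : norming_seq T w ->
  forall eps, eps > 0 -> exists n0, forall n, (n >= n0)%nat -> sdefect T (w n) < eps.
Proof.
  intros hw eps he. destruct (norming_sqr_cv w hw (eps * eps) ltac:(nra)) as [n0 hn0].
  exists n0. intros n hn. specialize (hn0 n hn). unfold R_dist in hn0.
  apply Rabs_def2 in hn0. pose proof (sdefect_ge0 T (w n)).
  pose proof (sdefect_sqr T hT (w n)) as hs. unfold defect in hs.
  rewrite <- nrm_sqr, (proj1 hw n), Rmult_1_r in hs. nra.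
Qed.

Lemma norming_seq_of_lower w : (forall n, nrm (w n) = 1) ->
  (forall n, opnorm T - opnorm T / (INR n + 2) < nrm (T (w n))) -> norming_seq T w.
Proof.
  intros hu hl. split; auto. intros eps he.
  assert (hN := opnorm_ge0 T hT).
  destruct (inv_INR_lt (eps / (opnorm T + 1))) as [n0 hn0]; [apply Rdiv_lt_0_compat; lra|].
  exists n0. intros n hn. specialize (hn0 n hn). specialize (hl n). pose proof (pos_INR n).
  assert (nrm (T (w n)) <= opnorm T).
  { rewrite <- (Rmult_1_r (opnorm T)), <- (hu n). apply opnorm_bound; auto. }
  assert (opnorm T / (INR n + 2) < eps).
  { apply Rle_lt_trans with ((opnorm T + 1) * / (INR n + 1)).
    - unfold Rdiv. apply Rmult_le_compat; try lra.
      + left. apply Rinv_0_lt_compat. lra.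
      + apply Rinv_le_contravar; lra.
    - apply Rmult_lt_reg_l with (/ (opnorm T + 1)); [apply Rinv_0_lt_compat; lra|].
      rewrite <- Rmult_assoc, Rinv_l, Rmult_1_l by lra. unfold Rdiv in hn0. lra. }
  unfold R_dist. rewrite Rabs_left1 by lra. lra.
Qed.

Lemma maximizer_of_vlim w x : norming_seq T w -> vlim w x -> M_set T x.
Proof.
  intros [hu hcv] hl. split.
  - symmetry. apply eq_of_abs_lt. intros eps he. destruct (hl eps he) as [n0 hn].
    specialize (hn n0 (le_n _)). pose proof (nrm_sub_abs_le (w n0) x) as h. rewrite hu in h. lra.
  - apply eq_of_abs_lt. intros eps he. pose proof (opnorm_ge0 T hT).
    destruct (hl (eps / 2 / (opnorm T + 1))) as [n0 hn0]; [apply Rdiv_lt_0_compat; lra|].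
    destruct (hcv (eps / 2) ltac:(lra)) as [n1 hn1].
    set (n := Nat.max n0 n1). specialize (hn0 n ltac:(lia)). specialize (hn1 n ltac:(lia)).
    unfold R_dist in hn1.
    pose proof (nrm_sub_abs_le (T (w n)) (T x)) as hd. rewrite <- linear_sub in hd by apply hT.
    pose proof (opnorm_bound T (vsub (w n) x) hT).
    assert (opnorm T * nrm (vsub (w n) x) <= eps / 2).
    { replace (eps / 2) with ((opnorm T + 1) * (eps / 2 / (opnorm T + 1))) by (field; lra).
      pose proof (nrm_ge0 (vsub (w n) x)). apply Rmult_le_compat; lra. }
    replace (nrm (T x) - opnorm T)
      with (- (nrm (T (w n)) - nrm (T x)) + (nrm (T (w n)) - opnorm T)) by ring.
    eapply Rle_lt_trans; [apply Rabs_triang|]. rewrite Rabs_Ropp. lra.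
Qed.

End Maximizers.

(** * A unique maximizer with a gap *)

Lemma linear_coeff_zero (d M lam0 : R) : 0 < lam0 ->
  (forall lam, Rabs lam <= lam0 -> 0 <= lam * d + M * (lam * lam)) -> d = 0.
Proof.
  intros hl0 h. apply NNPP. intro hd.
  assert (hd0 : 0 < Rabs d) by (apply Rabs_pos_lt; auto).
  assert (hM1 : 0 < Rabs M + 1) by (pose proof (Rabs_pos M); lra).
  set (t := Rmin lam0 (Rabs d / (Rabs M + 1))).
  assert (ht : 0 < t) by (apply Rmin_pos; auto; apply Rdiv_lt_0_compat; auto).
  assert (htl : t <= lam0) by apply Rmin_l.
  assert (htd : t * (Rabs M + 1) <= Rabs d).
  { apply Rle_trans with (Rabs d / (Rabs M + 1) * (Rabs M + 1)).
    - apply Rmult_le_compat_r; [lra | apply Rmin_r].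
    - right. field. lra. }
  assert (hMt : M * (t * t) <= Rabs M * t * t).
  { pose proof (Rle_abs M). assert (0 <= t * t) by nra. nra. }
  assert (htt : t * (t * (Rabs M + 1)) <= t * Rabs d) by (apply Rmult_le_compat_l; lra).
  destruct (Rlt_or_le 0 d) as [hp|hn].
  - specialize (h (- t)). rewrite Rabs_Ropp, Rabs_right in h by lra.
    rewrite (Rabs_right d) in htt by lra. specialize (h htl). nra.
  - specialize (h t). rewrite Rabs_right in h by lra.
    rewrite (Rabs_left1 d) in htt by lra. specialize (h htl). nra.
Qed.

Section SupportFunctionals.
Context {H : RHilbert} (T : H -> H) (hT : BL T).

Lemma support_functional_abs_le g B : support_functional T g -> BL B -> Rabs (g B) <= opnorm B.
Proof.
  intros [_ [gscal [glub _]]] hB.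
  assert (hk : forall k, 0 < k -> opnorm B <= k -> Rabs (g B) <= k).
  { intros k hk hle. assert (h1 : Rabs (g (op_scal (/ k) B)) <= 1).
    { apply (proj1 glub). exists (op_scal (/ k) B).
      split; [apply BL_scal; auto | split; [apply opnorm_scal_inv_le; auto | reflexivity]]. }
    rewrite gscal, Rabs_mult, Rabs_right in h1 by (auto; left; apply Rinv_0_lt_compat; auto).
    apply Rmult_le_reg_l with (/ k); [apply Rinv_0_lt_compat; auto|]. rewrite Rinv_l; lra. }
  pose proof (opnorm_ge0 B hB). apply Rnot_lt_le. intro h.
  pose proof (hk ((Rabs (g B) + opnorm B) / 2) ltac:(lra) ltac:(lra)). lra.
Qed.

Lemma support_functional_perturb g A lam : support_functional T g -> BL A ->
  g (op_add T (op_scal lam A)) = opnorm T + lam * g A.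
Proof.
  intros [gadd [gscal [_ gT]]] hA. rewrite gadd, gscal, gT; auto. apply BL_scal; auto.
Qed.

Lemma support_functional_div_opnorm (f : (H -> H) -> R) : 0 < opnorm T ->
  (forall A B, BL A -> BL B -> f (op_add A B) = f A + f B) ->
  (forall a A, BL A -> f (op_scal a A) = a * f A) ->
  (forall B, BL B -> Rabs (f B) <= opnorm B * opnorm T) ->
  f T = opnorm T * opnorm T -> support_functional T (fun B => f B / opnorm T).
Proof.
  intros hN fadd fscal fb fT. split; [|split; [|split]].
  - intros A B hA hB. rewrite fadd by auto. field. lra.
  - intros a A hA. rewrite fscal by auto. field. lra.
  - split.
    + intros r [B [hB [hle ->]]]. unfold Rdiv. rewrite Rabs_mult, Rabs_inv, (Rabs_right (opnorm T)) by lra.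
      apply Rmult_le_reg_r with (opnorm T); auto. rewrite Rmult_assoc, Rinv_l, Rmult_1_l, Rmult_1_r by lra.
      pose proof (fb B hB). pose proof (opnorm_ge0 T hT). nra.
    + intros b hb. apply hb. exists (op_scal (/ opnorm T) T).
      split; [apply BL_scal; auto | split; [apply opnorm_scal_inv_le; auto; lra|]].
      rewrite fscal, fT by auto. replace (/ opnorm T * (opnorm T * opnorm T) / opnorm T) with 1
        by (field; lra). rewrite Rabs_R1. reflexivity.
  - rewrite fT. field. lra.
Qed.

End SupportFunctionals.

Section Gap.
Context {H : RHilbert} (T : H -> H) (hT : BL T) (x0 : H) (hx0 : M_set T x0)
  (hgap : opnorm_on T (orth x0) < opnorm T).

Let N := opnorm T.
Let c0 := opnorm_on T (orth x0).

Lemma orth_opnorm_bounds : 0 <= c0 < N.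
Proof. split; [apply opnorm_on_ge0; auto using orth_vzero | exact hgap]. Qed.

Lemma orth_split x :
  let a := inner x x0 in let h := vsub x (vscal a x0) in
  orth x0 h /\ x = vadd (vscal a x0) h /\ inner x x = a * a + nrm h * nrm h.
Proof.
  intros a h. destruct hx0 as [h1 _].
  assert (hx00 : inner x0 x0 = 1) by (rewrite <- nrm_sqr, h1; ring).
  assert (ho : orth x0 h) by (unfold orth, h, a; inner_simpl; rewrite hx00; ring).
  assert (hx : x = vadd (vscal a x0) h) by (unfold h; rewrite vadd_comm, vsub_add; reflexivity).
  split; [|split]; auto. rewrite hx at 1 2. inner_simpl. unfold orth in ho.
  rewrite (inner_sym x0 h), ho, hx00, nrm_sqr. ring.
Qed.

(* [T x0] is orthogonal to [T h], so [‖T x‖²] splits without cross term. *)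
Lemma gap_image_bound x :
  let a := inner x x0 in let nh := nrm (vsub x (vscal a x0)) in
  inner (T x) (T x) <= a * a * (N * N) + c0 * c0 * (nh * nh).
Proof.
  intros a nh. destruct (orth_split x) as [ho [hx _]]. fold a in ho, hx.
  set (h := vsub x (vscal a x0)) in *.
  assert (fv : inner (T x0) (T h) = 0) by (apply maximizer_orth; auto).
  pose proof orth_opnorm_bounds as [hc0 _].
  assert (hTh : nrm (T h) <= c0 * nh) by (apply opnorm_on_bound; auto using orth_vzero, orth_scal).
  pose proof (nrm_ge0 (T h)).
  rewrite hx, (proj1 (proj1 hT)), (proj2 (proj1 hT)). inner_simpl.
  rewrite (inner_sym (T h) (T x0)), fv, <- (nrm_sqr (T x0)), (proj2 hx0), <- (nrm_sqr (T h)).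
  fold N. nra.
Qed.

Lemma gap_inner_split A x : BL A ->
  let K := opnorm A in
  let a := inner x x0 in let nh := nrm (vsub x (vscal a x0)) in
  let c := inner (A x0) (T x0) in
  exists X Y, inner (A x) (T x) = a * a * c + a * X + Y /\
   Rabs X <= 2 * K * N * nh /\ Rabs Y <= K * N * (nh * nh).
Proof.
  intros hA K a nh c. destruct (orth_split x) as [ho [hx _]]. fold a in ho, hx.
  set (h := vsub x (vscal a x0)) in *.
  pose proof orth_opnorm_bounds as [hc0 hc0N].
  assert (hTh : nrm (T h) <= N * nh).
  { assert (nrm (T h) <= c0 * nh) by (apply opnorm_on_bound; auto using orth_vzero, orth_scal).
    assert (0 <= nh) by apply nrm_ge0. nra. }
  assert (hAh : nrm (A h) <= K * nh) by (apply opnorm_bound; auto).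
  assert (hAx0 : nrm (A x0) <= K).
  { pose proof (opnorm_bound A x0 hA) as h0. rewrite (proj1 hx0) in h0. unfold K. lra. }
  pose proof (inner_abs_le (A x0) (T h)). pose proof (inner_abs_le (A h) (T x0)) as hT0.
  pose proof (inner_abs_le (A h) (T h)). rewrite (proj2 hx0) in hT0. fold N in hT0.
  pose proof (nrm_ge0 (A x0)). pose proof (nrm_ge0 (A h)). pose proof (nrm_ge0 (T h)).
  assert (0 <= N) by lra. assert (0 <= K) by (apply opnorm_ge0; auto).
  exists (inner (A x0) (T h) + inner (A h) (T x0)), (inner (A h) (T h)). split; [|split].
  - rewrite hx, (proj1 (proj1 hT)), (proj2 (proj1 hT)), (proj1 (proj1 hA)), (proj2 (proj1 hA)).
    inner_simpl. fold c. ring.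
  - eapply Rle_trans; [apply Rabs_triang|]. nra.
  - nra.
Qed.

Lemma gap_quadratic_bound (a nh K c lam X Y Tt At AA : R) :
  let g := N * N - c0 * c0 in
  Tt <= a * a * (N * N) + c0 * c0 * (nh * nh) ->
  At = a * a * c + a * X + Y ->
  Rabs X <= 2 * K * N * nh -> Rabs Y <= K * N * (nh * nh) ->
  AA <= K * K * (a * a + nh * nh) -> 0 <= K -> 0 <= nh ->
  Rabs lam * (2 * (K * N + Rabs c)) <= g / 2 ->
  Tt + 2 * lam * At + lam * lam * AA
  <= (N * N + 2 * lam * c + (K * K + 8 * K * K * N * N / g) * (lam * lam)) * (a * a + nh * nh).
Proof.
  intros g hTt hAt hX hY hAA hK hnh hl.
  pose proof orth_opnorm_bounds as [hc0 hc0N]. assert (hg : 0 < g) by (unfold g; nra).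
  assert (hN : 0 <= N) by lra.
  set (L := Rabs lam). set (al := Rabs a).
  assert (hL : 0 <= L) by apply Rabs_pos. assert (hal : 0 <= al) by apply Rabs_pos.
  assert (sqL : lam * lam = L * L) by (unfold L; rewrite <- Rabs_mult, Rabs_right; nra).
  assert (sqa : a * a = al * al) by (unfold al; rewrite <- Rabs_mult, Rabs_right; nra).
  assert (e1 : lam * a * X <= L * al * (2 * K * N * nh)).
  { eapply Rle_trans; [apply Rle_abs|]. rewrite !Rabs_mult. apply Rmult_le_compat_l; auto. nra. }
  assert (e2 : lam * Y <= L * (K * N * (nh * nh))).
  { eapply Rle_trans; [apply Rle_abs|]. rewrite Rabs_mult. apply Rmult_le_compat_l; auto. }
  assert (e3 : - (lam * c) <= L * Rabs c).
  { eapply Rle_trans; [apply Rle_abs|]. rewrite Rabs_Ropp, Rabs_mult. unfold L. lra. }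
  fold L in hl. clearbody L al.
  assert (e4 : lam * lam * AA <= lam * lam * (K * K * (a * a + nh * nh)))
    by (apply Rmult_le_compat_l; nra).
  set (q := 8 * K * K * N * N / g).
  assert (hq : 0 <= q) by (unfold q, Rdiv; apply Rmult_le_pos; [nra | left; apply Rinv_0_lt_compat; auto]).
  (* AM-GM: [4 L |a| K N nh <= (g/2) nh² + q λ² a²] *)
  assert (am : 4 * L * al * K * N * nh <= g / 2 * (nh * nh) + q * (lam * lam) * (a * a)).
  { rewrite sqL, sqa. apply Rmult_le_reg_l with g; auto. unfold q.
    replace (g * (g / 2 * (nh * nh) + 8 * K * K * N * N / g * (L * L) * (al * al)))
      with ((g * g * (nh * nh) + 16 * K * K * N * N * (L * L) * (al * al)) / 2) by (field; lra).
    pose proof (pow2_ge_0 (g * nh - 4 * K * N * L * al)). nra. }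
  assert (hl2 : L * (2 * (K * N + Rabs c)) * (nh * nh) <= g / 2 * (nh * nh))
    by (apply Rmult_le_compat_r; nra).
  assert (f1 : - (lam * c) * (nh * nh) <= L * Rabs c * (nh * nh)) by (apply Rmult_le_compat_r; nra).
  assert (0 <= lam * lam * q * (nh * nh)) by (apply Rmult_le_pos; [apply Rmult_le_pos|]; nra).
  subst At. unfold g in *. nra.
Qed.

Lemma perturb_image_sqr_le A lam x : BL A ->
  let K := opnorm A in let c := inner (A x0) (T x0) in let g := N * N - c0 * c0 in
  Rabs lam * (2 * (K * N + Rabs c)) <= g / 2 ->
  let y := op_add T (op_scal lam A) x in
  inner y y <= (N * N + 2 * lam * c + (K * K + 8 * K * K * N * N / g) * (lam * lam)) * inner x x.
Proof.
  intros hA K c g hl y.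
  destruct (orth_split x) as [_ [_ e1]]. pose proof (gap_image_bound x) as e2.
  destruct (gap_inner_split A x hA) as [X [Y [e3 [e4 e5]]]].
  set (nh := nrm (vsub x (vscal (inner x x0) x0))) in *.
  assert (hK : 0 <= K) by (apply opnorm_ge0; auto).
  assert (hAA : inner (A x) (A x) <= K * K * (inner x x0 * inner x x0 + nh * nh)).
  { rewrite <- e1, <- !nrm_sqr. pose proof (opnorm_bound A x hA) as hAx. fold K in hAx.
    pose proof (nrm_ge0 (A x)). pose proof (nrm_ge0 x). nra. }
  rewrite e1. unfold y, op_add, op_scal. inner_simpl. rewrite (inner_sym (T x) (A x)).
  pose proof (gap_quadratic_bound (inner x x0) nh K c lam X Y _ _ _ e2 e3 e4 e5 hAA hK
    (nrm_ge0 _) hl) as hq. cbv zeta in hq. unfold g. lra.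
Qed.

Lemma opnorm_perturb_upper A : BL A ->
  exists lam0 M, 0 < lam0 /\ forall lam, Rabs lam <= lam0 ->
    opnorm (op_add T (op_scal lam A)) * opnorm (op_add T (op_scal lam A)) <=
    N * N + 2 * lam * inner (A x0) (T x0) + M * (lam * lam).
Proof.
  intros hA. set (K := opnorm A). set (c := inner (A x0) (T x0)). set (g := N * N - c0 * c0).
  pose proof orth_opnorm_bounds as [hc0 hc0N].
  assert (hK : 0 <= K) by (apply opnorm_ge0; auto).
  assert (hg : 0 < g) by (unfold g; nra).
  assert (hd : 0 < 2 * (K * N + Rabs c) + 1) by (pose proof (Rabs_pos c); nra).
  set (lam0 := g / 2 / (2 * (K * N + Rabs c) + 1)).
  set (M := K * K + 8 * K * K * N * N / g).
  assert (hM : 0 <= M).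
  { unfold M, Rdiv. assert (0 <= 8 * K * K * N * N * / g); [|nra].
    apply Rmult_le_pos; [nra | left; apply Rinv_0_lt_compat; auto]. }
  exists lam0, M. split; [unfold lam0; apply Rdiv_lt_0_compat; lra|].
  intros lam hlam.
  assert (hl : Rabs lam * (2 * (K * N + Rabs c)) <= g / 2).
  { assert (Rabs lam * (2 * (K * N + Rabs c) + 1) <= g / 2).
    { apply Rle_trans with (lam0 * (2 * (K * N + Rabs c) + 1)); [apply Rmult_le_compat_r; lra|].
      unfold lam0. right. field. lra. }
    pose proof (Rabs_pos lam). nra. }
  set (R0 := N * N + 2 * lam * c + M * (lam * lam)).
  assert (hR0 : 0 <= R0).
  { assert (- (2 * lam * c) <= 2 * Rabs lam * Rabs c).
    { pose proof (Rle_abs (- (lam * c))) as hh. rewrite Rabs_Ropp, Rabs_mult in hh. lra. }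
    assert (0 <= Rabs lam * (K * N)) by (apply Rmult_le_pos; [apply Rabs_pos | nra]).
    unfold R0, g in *. nra. }
  assert (hle : opnorm (op_add T (op_scal lam A)) <= sqrt R0).
  { apply opnorm_le; [apply BL_add_scal; auto|]. intros x hx.
    apply nrm_le_of_sqr; [apply sqrt_pos|]. rewrite sqrt_sqrt by auto.
    pose proof (perturb_image_sqr_le A lam x hA hl) as hu. cbv zeta in hu.
    change (N * N - c0 * c0) with g in hu. fold K c M R0 in hu.
    assert (inner x x <= 1) by (rewrite <- nrm_sqr; pose proof (nrm_ge0 x); nra).
    pose proof (inner_pos x). nra. }
  pose proof (opnorm_ge0 _ (BL_add_scal T A lam hT hA)). pose proof (sqrt_sqrt R0 hR0). fold R0. nra.
Qed.

Lemma opnorm_perturb_lower A lam : BL A ->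
  N * N + 2 * lam * inner (A x0) (T x0) + lam * lam * inner (A x0) (A x0)
  <= opnorm (op_add T (op_scal lam A)) * opnorm (op_add T (op_scal lam A)).
Proof.
  intros hA. destruct hx0 as [h1 h2].
  assert (hB := BL_add_scal T A lam hT hA).
  pose proof (opnorm_ge _ x0 hB ltac:(lra)) as h.
  pose proof (nrm_ge0 (op_add T (op_scal lam A) x0)).
  enough (e : nrm (op_add T (op_scal lam A) x0) * nrm (op_add T (op_scal lam A) x0) =
     N * N + 2 * lam * inner (A x0) (T x0) + lam * lam * inner (A x0) (A x0)) by nra.
  rewrite nrm_sqr. unfold op_add, op_scal. inner_simpl. rewrite <- (nrm_sqr (T x0)), h2.
  rewrite (inner_sym (T x0) (A x0)). unfold N. ring.
Qed.

Lemma BJ_orth_iff_at_maximizer A : BL A -> (BJ_orth T A <-> inner (A x0) (T x0) = 0).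
Proof.
  intros hA. split.
  - intros hbj. destruct (opnorm_perturb_upper A hA) as [lam0 [M [hl0 hM]]].
    enough (2 * inner (A x0) (T x0) = 0) by lra.
    apply (linear_coeff_zero _ M lam0 hl0). intros lam hl. specialize (hM lam hl).
    specialize (hbj lam). pose proof (opnorm_ge0 T hT).
    assert (N * N <= opnorm (op_add T (op_scal lam A)) * opnorm (op_add T (op_scal lam A)))
      by (unfold N; nra).
    lra.
  - intros e lam. pose proof (opnorm_perturb_lower A lam hA) as hl. rewrite e in hl.
    pose proof (inner_pos (A x0)). pose proof (opnorm_ge0 T hT).
    pose proof (opnorm_ge0 _ (BL_add_scal T A lam hT hA)).
    apply Rle_ge, le_of_sqr_le; auto. unfold N in hl. nra.
Qed.

Lemma support_functional_eq_at_maximizer g A : 0 < N -> BL A -> support_functional T g ->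
  g A * N = inner (A x0) (T x0).
Proof.
  intros hN hA hg. destruct (opnorm_perturb_upper A hA) as [lam0 [M [hl0 hM]]].
  enough (2 * (inner (A x0) (T x0) - g A * N) = 0) by lra.
  apply (linear_coeff_zero _ (Rabs M) lam0 hl0). intros lam hl. specialize (hM lam hl).
  pose proof (support_functional_abs_le T g _ hg (BL_add_scal T A lam hT hA)) as hb.
  rewrite (support_functional_perturb T hT g A lam hg hA) in hb.
  set (u := N + lam * g A) in hb. set (B := op_add T (op_scal lam A)) in *.
  assert (hu : Rabs u * Rabs u = u * u) by (rewrite <- Rabs_mult; apply Rabs_right; nra).
  assert (hsq : u * u <= opnorm B * opnorm B)
    by (rewrite <- hu; apply Rmult_le_compat; auto using Rabs_pos).
  assert (eu : u * u = N * N + 2 * lam * g A * N + lam * lam * (g A * g A)) by (unfold u; ring).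
  assert (hMl : M * (lam * lam) <= Rabs M * (lam * lam))
    by (apply Rmult_le_compat_r; [nra | apply Rle_abs]).
  assert (0 <= lam * lam * (g A * g A)) by (apply Rmult_le_pos; nra).
  lra.
Qed.

Lemma orth_part_sqr_le x : nrm x = 1 ->
  let nh := nrm (vsub x (vscal (inner x x0) x0)) in
  (N * N - c0 * c0) * (nh * nh) <= N * N - inner (T x) (T x).
Proof.
  intros hx nh. destruct (orth_split x) as [_ [_ e1]]. pose proof (gap_image_bound x) as e2; cbv zeta in e2.
  fold nh in e1, e2. rewrite <- nrm_sqr, hx in e1. nra.
Qed.

Lemma inner_near_maximizer A x : BL A -> nrm x = 1 ->
  let nh := nrm (vsub x (vscal (inner x x0) x0)) in
  let c := inner (A x0) (T x0) in
  Rabs (inner (A x) (T x) - c) <= (Rabs c + 3 * opnorm A * N) * nh.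
Proof.
  intros hA hx nh c. destruct (orth_split x) as [_ [_ e1]].
  destruct (gap_inner_split A x hA) as [X [Y [e3 [e4 e5]]]]. fold nh c in e1, e3, e4, e5.
  set (a := inner x x0) in *. rewrite <- nrm_sqr, hx in e1.
  assert (hnh : 0 <= nh) by apply nrm_ge0.
  assert (hnh1 : nh <= 1) by nra.
  assert (ha : Rabs a <= 1) by (apply abs_le_of_sqr_le; nra).
  assert (hKN : 0 <= opnorm A * N) by (apply Rmult_le_pos; apply opnorm_ge0; auto).
  rewrite e3. replace (a * a * c + a * X + Y - c) with (- (nh * nh) * c + a * X + Y)
    by (replace (a * a) with (1 - nh * nh) by lra; ring).
  eapply Rle_trans; [apply Rabs_triang|]. eapply Rle_trans; [apply Rplus_le_compat_r, Rabs_triang|].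
  rewrite !Rabs_mult, Rabs_Ropp, (Rabs_right (nh * nh)) by nra.
  pose proof (Rabs_pos a). pose proof (Rabs_pos X). pose proof (Rabs_pos c).
  assert (Rabs a * Rabs X <= 2 * opnorm A * N * nh) by nra.
  assert (nh * nh * Rabs c <= nh * Rabs c) by (apply Rmult_le_compat_r; nra).
  assert (opnorm A * N * (nh * nh) <= opnorm A * N * nh) by (apply Rmult_le_compat_l; nra).
  nra.
Qed.

Lemma norming_inner_cv A xs : BL A -> norming_seq T xs ->
  Un_cv (fun n => inner (A (xs n)) (T (xs n))) (inner (A x0) (T x0)).
Proof.
  intros hA hxs eps heps. set (C := Rabs (inner (A x0) (T x0)) + 3 * opnorm A * N).
  assert (hC : 0 <= C).
  { pose proof (Rabs_pos (inner (A x0) (T x0))). pose proof (opnorm_ge0 A hA).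
    pose proof (opnorm_ge0 T hT). unfold C, N. nra. }
  set (del := eps / (C + 1)). assert (hdel : 0 < del) by (apply Rdiv_lt_0_compat; lra).
  set (g := N * N - c0 * c0). assert (hg : 0 < g) by (pose proof orth_opnorm_bounds; unfold g; nra).
  destruct (norming_sqr_cv T xs hxs (g * (del * del)) ltac:(apply Rmult_lt_0_compat; nra)) as [n0 hn0].
  exists n0. intros n hn. specialize (hn0 n hn). unfold R_dist in *. apply Rabs_def2 in hn0.
  pose proof (orth_part_sqr_le (xs n) (proj1 hxs n)) as hp.
  pose proof (inner_near_maximizer A (xs n) hA (proj1 hxs n)) as hi.
  set (nh := nrm (vsub (xs n) (vscal (inner (xs n) x0) x0))) in *. fold C in hi.
  assert (hnh : nh <= del).
  { apply le_of_sqr_le; [lra|]. apply Rmult_le_reg_l with g; auto. fold g in hp. unfold N in *. lra. }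
  eapply Rle_lt_trans; [apply hi|].
  apply Rle_lt_trans with (C * del); [apply Rmult_le_compat_l; auto|].
  unfold del. apply Rmult_lt_reg_r with (C + 1); [lra|].
  replace (C * (eps / (C + 1)) * (C + 1)) with (C * eps) by (field; lra). nra.
Qed.

End Gap.

Definition BJ_norming_criterion {H : RHilbert} (T : H -> H) : Prop :=
  forall A : H -> H, BL A ->
    (BJ_orth T A <->
     (forall xs, norming_seq T xs ->
      forall l, subseq_limit (fun n => inner (A (xs n)) (T (xs n))) l -> l = 0)).

Section GapConsequences.
Context {H : RHilbert} (T : H -> H) (hT : BL T) (x0 : H) (hx0 : M_set T x0)
  (hgap : opnorm_on T (orth x0) < opnorm T).

Lemma smooth_point_of_gap : 0 < opnorm T -> smooth_point T.
Proof.
  intros hN. destruct hx0 as [h1 h2].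
  exists (fun B => inner (B x0) (T x0) / opnorm T). split.
  - apply support_functional_div_opnorm; auto.
    + intros A B _ _. unfold op_add. inner_simpl. reflexivity.
    + intros a A _. unfold op_scal. inner_simpl. reflexivity.
    + intros B hB. eapply Rle_trans; [apply inner_abs_le|]. rewrite h2.
      pose proof (opnorm_bound B x0 hB) as hB0. rewrite h1 in hB0.
      pose proof (nrm_ge0 (B x0)). pose proof (opnorm_ge0 T hT). nra.
    + rewrite <- nrm_sqr, h2. reflexivity.
  - intros g hg A hA. rewrite <- (support_functional_eq_at_maximizer T hT x0 hx0 hgap g A hN hA hg).
    field. lra.
Qed.

Lemma BJ_norming_criterion_of_gap : BJ_norming_criterion T.
Proof.
  intros A hA. rewrite (BJ_orth_iff_at_maximizer T hT x0 hx0 hgap A hA). split.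
  - intros e xs hxs l [phi [hphi hcv]].
    pose proof (Un_cv_subseq _ _ phi hphi (norming_inner_cv T hT x0 hx0 hgap A xs hA hxs)) as h.
    rewrite e in h. eapply UL_sequence; eauto.
  - intros h. apply (h (fun _ => x0)).
    + split; [intro; apply hx0 |]. rewrite (proj2 hx0). apply Un_cv_const.
    + exists (fun n => n). split; auto. apply Un_cv_const.
Qed.

End GapConsequences.

(** * Ultrafilter limits *)

Definition free_ultrafilter (U : (nat -> Prop) -> Prop) : Prop :=
  (forall S1 S2, U S1 -> U S2 -> U (fun n => S1 n /\ S2 n)) /\
  (forall S1 S2 : nat -> Prop, (forall n, S1 n -> S2 n) -> U S1 -> U S2) /\
  ~ U (fun _ => False) /\
  (forall S, U S \/ U (fun n => ~ S n)) /\
  (forall N, U (fun n => (N <= n)%nat)).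

Lemma free_ultrafilter_exists : exists U, free_ultrafilter U.
Proof.
  assert (PF : filter.ProperFilter filter.eventually) by exact _.
  destruct (filter.ultraFilterLemma PF) as [G [GU FG]].
  assert (GF : filter.Filter G) by (destruct GU as [GP _]; exact _).
  exists G; split; [|split; [|split; [|split]]].
  - intros S1 S2 h1 h2. exact (filter.filterI h1 h2).
  - intros S1 S2 h h1. exact (filter.filterS h h1).
  - intros h. apply (filter.filter_not_empty G). exact h.
  - intros S. exact (filter.in_ultra_setVsetC S GU).
  - intros N. apply FG. exists N; [exact I|]. intros n Hn. simpl in Hn.
    destruct (@ssrnat.leP N n); [assumption | discriminate].
Qed.

Section UltraLimit.
Variable U : (nat -> Prop) -> Prop.
Hypothesis hU : free_ultrafilter U.
Implicit Types (a b : nat -> R).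

Definition ulim_to a l : Prop := forall eps, eps > 0 -> U (fun n => Rabs (a n - l) < eps).

Lemma ultra_and S1 S2 : U S1 -> U S2 -> U (fun n => S1 n /\ S2 n).
Proof. apply hU. Qed.

Lemma ultra_mono (S1 S2 : nat -> Prop) : (forall n, S1 n -> S2 n) -> U S1 -> U S2.
Proof. apply hU. Qed.

Lemma ultra_nonempty S : U S -> exists n, S n.
Proof.
  intros hS. apply NNPP. intro hn. apply (proj1 (proj2 (proj2 hU))).
  apply (ultra_mono S); auto. intros n h. apply hn. eauto.
Qed.

Lemma ultra_all (S : nat -> Prop) : (forall n, S n) -> U S.
Proof. intros h. apply (ultra_mono (fun n => (0 <= n)%nat)); [auto | apply hU]. Qed.

Lemma ulim_to_unique a l1 l2 : ulim_to a l1 -> ulim_to a l2 -> l1 = l2.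
Proof.
  intros h1 h2. apply eq_of_abs_lt. intros eps he.
  destruct (ultra_nonempty _ (ultra_and _ _ (h1 (eps / 2) ltac:(lra)) (h2 (eps / 2) ltac:(lra))))
    as [n [e1 e2]].
  replace (l1 - l2) with (- (a n - l1) + (a n - l2)) by ring.
  eapply Rle_lt_trans; [apply Rabs_triang|]. rewrite Rabs_Ropp. lra.
Qed.

Lemma ulim_to_exists a M : (forall n, Rabs (a n) <= M) -> exists l, ulim_to a l.
Proof.
  intros hb. assert (hb' : forall n, - M <= a n <= M).
  { intro n. specialize (hb n). pose proof (Rle_abs (a n)). pose proof (Rle_abs (- a n)).
    rewrite Rabs_Ropp in *. lra. }
  set (S := fun r => U (fun n => r <= a n)).
  destruct (completeness S) as [l [hl1 hl2]].
  - exists M. intros r hr. apply Rnot_lt_le. intro h. apply (proj1 (proj2 (proj2 hU))).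
    apply (ultra_mono (fun n => r <= a n)); [intros n hn; specialize (hb' n); lra | exact hr].
  - exists (- M). apply ultra_all. intro n. apply hb'.
  - exists l. intros eps he.
    assert (A1 : U (fun n => l - eps / 2 < a n)).
    { destruct (classic (exists r, S r /\ l - eps / 2 < r)) as [[r [hr1 hr2]]|hn].
      - apply (ultra_mono (fun n => r <= a n)); [intros n hn; lra | exact hr1].
      - exfalso. assert (l <= l - eps / 2); [|lra]. apply hl2. intros r hr.
        apply Rnot_lt_le. intro. apply hn; eauto. }
    assert (A2 : U (fun n => a n < l + eps / 2)).
    { destruct (proj1 (proj2 (proj2 (proj2 hU))) (fun n => l + eps / 2 <= a n)) as [h|h].
      - exfalso. assert (l + eps / 2 <= l) by (apply hl1; exact h). lra.
      - apply (ultra_mono (fun n => ~ (l + eps / 2 <= a n))); [intros n hn; lra | exact h]. }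
    apply (ultra_mono (fun n => l - eps / 2 < a n /\ a n < l + eps / 2)).
    + intros n [u v]. apply Rabs_def1; lra.
    + apply ultra_and; auto.
Qed.

Lemma ulim_to_add a b la lb : ulim_to a la -> ulim_to b lb -> ulim_to (fun n => a n + b n) (la + lb).
Proof.
  intros ha hb eps he.
  apply (ultra_mono (fun n => Rabs (a n - la) < eps / 2 /\ Rabs (b n - lb) < eps / 2)).
  - intros n [u v]. replace (a n + b n - (la + lb)) with ((a n - la) + (b n - lb)) by ring.
    eapply Rle_lt_trans; [apply Rabs_triang | lra].
  - apply ultra_and; [apply ha | apply hb]; lra.
Qed.

Lemma ulim_to_scal a la c : ulim_to a la -> ulim_to (fun n => c * a n) (c * la).
Proof.
  intros ha eps he. pose proof (Rabs_pos c).
  apply (ultra_mono (fun n => Rabs (a n - la) < eps / (Rabs c + 1))).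
  - intros n hn. replace (c * a n - c * la) with (c * (a n - la)) by ring.
    rewrite Rabs_mult. pose proof (Rabs_pos (a n - la)).
    apply Rle_lt_trans with ((Rabs c + 1) * Rabs (a n - la)); [nra|].
    apply Rmult_lt_reg_l with (/ (Rabs c + 1)); [apply Rinv_0_lt_compat; lra|].
    rewrite <- Rmult_assoc, Rinv_l, Rmult_1_l by lra. unfold Rdiv in hn. lra.
  - apply ha. apply Rdiv_lt_0_compat; lra.
Qed.

Lemma ulim_to_of_cv a l : Un_cv a l -> ulim_to a l.
Proof.
  intros hcv eps he. destruct (hcv eps he) as [n0 hn0].
  apply (ultra_mono (fun n => (n0 <= n)%nat)); [intros n hn; apply hn0; lia | apply hU].
Qed.

Lemma ulim_to_abs_le a l M : (forall n, Rabs (a n) <= M) -> ulim_to a l -> Rabs l <= M.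
Proof.
  intros hb hl. apply Rnot_lt_le. intro h.
  destruct (ultra_nonempty _ (hl (Rabs l - M) ltac:(lra))) as [n hn].
  specialize (hb n). assert (Rabs l <= Rabs (a n) + Rabs (a n - l)).
  { replace l with (a n - (a n - l)) at 1 by ring.
    eapply Rle_trans; [apply Rabs_triang|]. rewrite Rabs_Ropp. lra. }
  lra.
Qed.

Lemma ulim_to_ext a b l : (forall n, a n = b n) -> ulim_to a l -> ulim_to b l.
Proof.
  intros he ha eps heps. apply (ultra_mono (fun n => Rabs (a n - l) < eps)); [|apply ha; auto].
  intros n h. rewrite <- he. auto.
Qed.

(* Junk value [0] when there is no [U]-limit, which never happens for bounded sequences. *)
Definition ulim a : R := epsilon (inhabits 0) (ulim_to a).

Lemma ulim_spec a M : (forall n, Rabs (a n) <= M) -> ulim_to a (ulim a).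
Proof. intros hb. unfold ulim. apply epsilon_spec. eapply ulim_to_exists; eauto. Qed.

Lemma ulim_eq a M l : (forall n, Rabs (a n) <= M) -> ulim_to a l -> ulim a = l.
Proof. intros hb hl. eapply ulim_to_unique; eauto. eapply ulim_spec; eauto. Qed.

End UltraLimit.

Definition bw_pick (a : nat -> R) (l : R) (k j : nat) : nat :=
  epsilon (inhabits 0%nat) (fun m => (k <= m)%nat /\ Rabs (a m - l) < / (INR j + 1)).

Fixpoint bw_index (a : nat -> R) (l : R) (n : nat) : nat :=
  match n with
  | O => bw_pick a l 0 0
  | S n' => bw_pick a l (S (bw_index a l n')) (S n')
  end.

(* The subsequence is extracted around an ultrafilter limit, which exists for every bounded sequence. *)
Lemma bolzano_weierstrass (a : nat -> R) M : (forall n, Rabs (a n) <= M) ->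
  exists phi l, (forall n, (phi n < phi (S n))%nat) /\ Un_cv (fun n => a (phi n)) l.
Proof.
  intros hb. destruct free_ultrafilter_exists as [U hU].
  set (l := ulim U a). assert (hl : ulim_to U a l) by (eapply ulim_spec; eauto).
  assert (C : forall k j, (k <= bw_pick a l k j)%nat /\ Rabs (a (bw_pick a l k j) - l) < / (INR j + 1)).
  { intros k j. unfold bw_pick. apply epsilon_spec.
    assert (he : / (INR j + 1) > 0) by (apply Rinv_0_lt_compat; pose proof (pos_INR j); lra).
    destruct (ultra_nonempty U hU _ (ultra_and U hU _ _ (hl _ he) (proj2 (proj2 (proj2 (proj2 hU))) k)))
      as [m [h1 h2]].
    exists m. auto. }
  exists (bw_index a l), l. split.
  - intro n. simpl. destruct (C (S (bw_index a l n)) (S n)). lia.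
  - intros eps he. destruct (inv_INR_lt eps he) as [n0 hn0]. exists n0. intros n hn.
    unfold R_dist. apply Rlt_trans with (/ (INR n + 1)); [destruct n; apply C | apply hn0; auto].
Qed.

(** * Operators seen differently by two norming sequences *)

Section Split.
Context {H : RHilbert} (T : H -> H) (hT : BL T).

Definition norming_split (A : H -> H) (u v : nat -> H) (L : R) : Prop :=
  BL A /\ norming_seq T u /\ norming_seq T v /\
  Un_cv (fun n => inner (A (u n)) (T (u n))) 0 /\
  Un_cv (fun n => inner (A (v n)) (T (v n))) L /\ L <> 0.

Lemma ultra_support_functional U w : free_ultrafilter U -> 0 < opnorm T -> norming_seq T w ->
  support_functional T (fun B => ulim U (fun n => inner (B (w n)) (T (w n))) / opnorm T).
Proof.
  intros hU hN hw. apply support_functional_div_opnorm; auto.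
  - intros A B hA hB. apply (ulim_eq U hU _ _ _ (norming_inner_bound T hT _ w (BL_add A B hA hB) hw)).
    apply (ulim_to_ext U hU (fun n => inner (A (w n)) (T (w n)) + inner (B (w n)) (T (w n)))).
    { intro n. unfold op_add. inner_simpl. reflexivity. }
    apply (ulim_to_add U hU); eapply ulim_spec; eauto; apply norming_inner_bound; auto.
  - intros a A hA. apply (ulim_eq U hU _ _ _ (norming_inner_bound T hT _ w (BL_scal a A hA) hw)).
    apply (ulim_to_ext U hU (fun n => a * inner (A (w n)) (T (w n)))).
    { intro n. unfold op_scal. inner_simpl. reflexivity. }
    apply (ulim_to_scal U hU); eapply ulim_spec; eauto; apply norming_inner_bound; auto.
  - intros B hB. assert (hb := norming_inner_bound T hT B w hB hw).
    eapply (ulim_to_abs_le U hU); [exact hb | eapply ulim_spec; eauto].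
  - apply (ulim_eq U hU _ _ _ (norming_inner_bound T hT _ w hT hw)).
    apply (ulim_to_of_cv U hU); auto. apply norming_sqr_cv; auto.
Qed.

Lemma not_smooth_of_split A u v L : 0 < opnorm T -> norming_split A u v L -> ~ smooth_point T.
Proof.
  intros hN [hA [hu [hv [cu [cv hL]]]]] [f [hf huniq]].
  destruct free_ultrafilter_exists as [U hU].
  pose proof (huniq _ (ultra_support_functional U u hU hN hu) A hA) as e1.
  pose proof (huniq _ (ultra_support_functional U v hU hN hv) A hA) as e2.
  cbv beta in e1, e2.
  rewrite (ulim_eq U hU _ _ 0 (norming_inner_bound T hT A u hA hu)) in e1
    by (apply (ulim_to_of_cv U hU); auto).
  rewrite (ulim_eq U hU _ _ L (norming_inner_bound T hT A v hA hv)) in e2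
    by (apply (ulim_to_of_cv U hU); auto).
  apply hL. rewrite <- e2 in e1. unfold Rdiv in e1.
  apply Rmult_eq_reg_r with (/ opnorm T); [lra | apply Rinv_neq_0_compat; lra].
Qed.

Lemma not_BJ_norming_criterion_of_split A u v L : norming_split A u v L -> ~ BJ_norming_criterion T.
Proof.
  intros [hA [hu [hv [cu [cv hL]]]]] h3. apply hL.
  enough (hbj : BJ_orth T A).
  { apply ((proj1 (h3 A hA)) hbj v hv L). exists (fun n => n). split; auto. }
  intro lam. assert (hB := BL_add_scal T A lam hT hA). set (B := op_add T (op_scal lam A)) in *.
  assert (hb : forall n, inner (T (u n)) (T (u n)) + 2 * lam * inner (A (u n)) (T (u n))
                         <= opnorm B * opnorm B).
  { intro n. pose proof (opnorm_bound B (u n) hB) as hBu. rewrite (proj1 hu n), Rmult_1_r in hBu.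
    pose proof (nrm_ge0 (B (u n))).
    assert (inner (B (u n)) (B (u n)) <= opnorm B * opnorm B) by (rewrite <- nrm_sqr; nra).
    assert (e : inner (B (u n)) (B (u n)) = inner (T (u n)) (T (u n))
                 + 2 * lam * inner (A (u n)) (T (u n)) + lam * lam * inner (A (u n)) (A (u n))).
    { unfold B, op_add, op_scal. inner_simpl. rewrite (inner_sym (T (u n)) (A (u n))). ring. }
    pose proof (inner_pos (A (u n))). nra. }
  pose proof (CV_plus _ _ _ _ (norming_sqr_cv T u hu) (CV_mult _ _ _ _ (Un_cv_const (2 * lam)) cu)) as hc.
  pose proof (Un_cv_le _ _ _ hb hc). pose proof (opnorm_ge0 B hB). pose proof (opnorm_ge0 T hT).
  apply Rle_ge, le_of_sqr_le; auto. nra.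
Qed.

End Split.

Lemma seq_choice {X : Type} (x0 : X) (P : nat -> X -> Prop) :
  (forall n, exists x, P n x) -> exists f : nat -> X, forall n, P n (f n).
Proof. intros h. exists (fun n => epsilon (inhabits x0) (P n)). intro n. apply epsilon_spec, h. Qed.

Definition unique_maximizer_with_gap {H : RHilbert} (T : H -> H) : Prop :=
  exists x0 : H, nrm x0 = 1 /\ (forall x, M_set T x <-> (x = x0 \/ x = vopp x0)) /\
    opnorm_on T (orth x0) < opnorm T.

Section NoGap.
Context {H : RHilbert} (T : H -> H) (hT : BL T) (hN : 0 < opnorm T).

Lemma norming_seq_in P : P vzero -> (forall a x, P x -> P (vscal a x)) ->
  opnorm T <= opnorm_on T P -> exists w, (forall n, P (w n)) /\ norming_seq T w.
Proof.
  intros h0 hs hle.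
  assert (hex : forall n : nat, exists x, (P x /\ nrm x = 1) /\
                 opnorm T - opnorm T / (INR n + 2) < nrm (T x)).
  { intro n. pose proof (pos_INR n).
    assert (he : 0 < opnorm T / (INR n + 2) < opnorm_on T P).
    { split; [apply Rdiv_lt_0_compat; lra|].
      apply Rlt_le_trans with (opnorm T); auto. apply Rmult_lt_reg_r with (INR n + 2); [lra|].
      unfold Rdiv. rewrite Rmult_assoc, Rinv_l by lra. nra. }
    destruct (unit_near_maximizer_on T hT P _ h0 hs he) as [x [hx1 [hx2 hx3]]].
    exists x. repeat split; auto. lra. }
  destruct (seq_choice vzero _ hex) as [w hw].
  exists w. split; [intro n; apply hw|]. apply norming_seq_of_lower; auto; apply hw.
Qed.

Lemma not_unique_maximizer_with_gap_cases : ~ unique_maximizer_with_gap T ->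
  (exists x y, M_set T x /\ M_set T y /\ y <> x /\ y <> vopp x) \/
  (exists x0, M_set T x0 /\ opnorm T <= opnorm_on T (orth x0)) \/
  (forall x, ~ M_set T x).
Proof.
  intros hn. destruct (classic (exists x0, M_set T x0)) as [[x0 hx0]|hno].
  2: { right; right. intros x hx. apply hno. eauto. }
  destruct (classic (exists y, M_set T y /\ y <> x0 /\ y <> vopp x0)) as [[y hy]|hno2].
  { left. exists x0, y. tauto. }
  right; left. exists x0. split; auto. apply Rnot_lt_le. intro h.
  apply hn. exists x0. split; [apply hx0|]. split; auto. intro x. split.
  - intro hm. apply NNPP. intro hxx. apply hno2. exists x. tauto.
  - intros [->| ->]; auto. apply M_set_opp; auto.
Qed.

(* [A = ⟨·, y - ⟨y,x⟩x⟩ T y] is invisible from [x] but not from [y]. *)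
Lemma split_of_two_maximizers x y : M_set T x -> M_set T y -> y <> x -> y <> vopp x ->
  exists A u v L, norming_split T A u v L.
Proof.
  intros [hx1 hx2] [hy1 hy2] hne1 hne2.
  set (s := inner y x). set (w := vsub y (vscal s x)).
  assert (hxx : inner x x = 1) by (rewrite <- nrm_sqr, hx1; ring).
  assert (hyy : inner y y = 1) by (rewrite <- nrm_sqr, hy1; ring).
  exists (fun z => vscal (inner z w) (T y)), (fun _ => x), (fun _ => y),
    ((1 - s * s) * (opnorm T * opnorm T)).
  split; [apply BL_rank_one | split; [|split; [|split; [|split]]]].
  - split; auto. rewrite hx2. apply Un_cv_const.
  - split; auto. rewrite hy2. apply Un_cv_const.
  - apply (Un_cv_ext (fun _ => 0)); [|apply Un_cv_const]. intro n. unfold w, s. inner_simpl.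
    rewrite hxx, (inner_sym x y). ring.
  - apply (Un_cv_ext (fun _ => (1 - s * s) * (opnorm T * opnorm T))); [|apply Un_cv_const].
    intro n. unfold w. inner_simpl. rewrite hyy, <- (nrm_sqr (T y)), hy2. fold s. ring.
  - intro e. assert (hs : s * s = 1) by (apply Rmult_integral in e; destruct e; nra).
    assert (hw : w = vzero).
    { apply inner_def. unfold w. inner_simpl. rewrite hxx, hyy, (inner_sym x y). fold s. nra. }
    apply vsub_eq0 in hw. assert (s = 1 \/ s = -1) as [e1|e1] by nra; rewrite e1 in hw.
    + apply hne1. rewrite hw. apply vscal_1.
    + apply hne2. rewrite hw. symmetry. apply vopp_scal.
Qed.

Lemma split_of_no_gap x0 : M_set T x0 -> opnorm T <= opnorm_on T (orth x0) ->
  exists A u v L, norming_split T A u v L.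
Proof.
  intros [hx1 hx2] hge.
  destruct (norming_seq_in (orth x0) (orth_vzero x0) (orth_scal x0) hge) as [h [hho hh]].
  assert (hxx : inner x0 x0 = 1) by (rewrite <- nrm_sqr, hx1; ring).
  exists (fun z => vscal (inner z x0) (T x0)), h, (fun _ => x0), (opnorm T * opnorm T).
  split; [apply BL_rank_one | split; [|split; [|split; [|split]]]]; auto.
  - split; auto. rewrite hx2. apply Un_cv_const.
  - apply (Un_cv_ext (fun _ => 0)); [|apply Un_cv_const]. intro n. inner_simpl.
    rewrite (hho n). ring.
  - apply (Un_cv_ext (fun _ => opnorm T * opnorm T)); [|apply Un_cv_const]. intro n.
    inner_simpl. rewrite hxx, <- (nrm_sqr (T x0)), hx2. ring.
  - nra.
Qed.

End NoGap.

(** * No maximizer *)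

Lemma vlim_scal_seq {H : RHilbert} (e : H) (b : nat -> R) l :
  Un_cv b l -> vlim (fun n => vscal (b n) e) (vscal l e).
Proof.
  intros hb eps he. pose proof (nrm_ge0 e).
  destruct (hb (eps / (nrm e + 1))) as [n0 hn0]; [apply Rdiv_lt_0_compat; lra|].
  exists n0. intros n hn. specialize (hn0 n hn). unfold R_dist in hn0.
  assert (E : vsub (vscal (b n) e) (vscal l e) = vscal (b n - l) e)
    by (apply vec_ext; intro z; inner_simpl; ring).
  rewrite E, nrm_scal. pose proof (Rabs_pos (b n - l)).
  apply Rle_lt_trans with (Rabs (b n - l) * (nrm e + 1)); [nra|].
  apply Rmult_lt_reg_r with (/ (nrm e + 1)); [apply Rinv_0_lt_compat; lra|].
  rewrite Rmult_assoc, Rinv_r, Rmult_1_r by lra. exact hn0.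
Qed.

Lemma opnorm_on_mono {H : RHilbert} (T : H -> H) (P Q : H -> Prop) : BL T -> P vzero ->
  (forall x, P x -> Q x) -> opnorm_on T P <= opnorm_on T Q.
Proof.
  intros hT h0 hPQ. apply opnorm_on_le; auto. intros x hx h1. apply opnorm_on_ge; auto.
Qed.

Section NoMaximizer.
Context {H : RHilbert} (T : H -> H) (hT : BL T) (hN : 0 < opnorm T).

Let N := opnorm T.

Lemma sdefect_lower_of_bound q g : 0 <= q < N -> nrm (T g) <= q * nrm g ->
  sqrt (N * N - q * q) * nrm g <= sdefect T g.
Proof.
  intros hq hg. pose proof (nrm_ge0 g). pose proof (nrm_ge0 (T g)).
  apply le_of_sqr_le; [apply sdefect_ge0|].
  replace (sqrt (N * N - q * q) * nrm g * (sqrt (N * N - q * q) * nrm g))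
    with (sqrt (N * N - q * q) * sqrt (N * N - q * q) * (nrm g * nrm g)) by ring.
  rewrite sqrt_sqrt by nra. rewrite sdefect_sqr by auto. unfold defect.
  rewrite <- !nrm_sqr. fold N. nra.
Qed.

(* If [T] is contracted by [q < ‖T‖] on the components of the [y n] orthogonal to [e], then
   [sdefect] controls the distance between these components, so a norming sequence whose
   [e]-coordinates converge is Cauchy. *)
Lemma norming_seq_vlim_of_gap (e : H) (y : nat -> H) (b : nat -> R) l q :
  nrm e = 1 -> 0 <= q < N ->
  (forall m n, let d := vsub (vsub (y m) (vscal (b m) e)) (vsub (y n) (vscal (b n) e)) in
     nrm (T d) <= q * nrm d) ->
  norming_seq T y -> Un_cv b l -> exists x, vlim y x.
Proof.
  intros he hq hgap hy hb.
  set (g := fun n => vsub (y n) (vscal (b n) e)).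
  set (k := sqrt (N * N - q * q)). assert (hk : 0 < k) by (apply sqrt_lt_R0; nra).
  assert (hd : forall m n, k * nrm (vsub (g m) (g n)) <= sdefect T (y m) + sdefect T (y n)
                                                       + Rabs (b n - b m) * N).
  { intros m n. eapply Rle_trans; [apply sdefect_lower_of_bound; [auto | apply hgap]|].
    assert (E : vsub (g m) (g n) = vadd (vsub (y m) (y n)) (vscal (b n - b m) e))
      by (apply vec_ext; intro z; unfold g; inner_simpl; ring).
    rewrite E. eapply Rle_trans; [apply sdefect_triangle; auto|]. rewrite sdefect_scal by auto.
    pose proof (sdefect_sub_le T hT (y m) (y n)). pose proof (sdefect_le T hT e) as he'.
    rewrite he in he'. fold N in he'. pose proof (Rabs_pos (b n - b m)). nra. }
  destruct (complete_vlim g) as [gl hgl].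
  { intros eps heps. assert (hN0 : 0 <= N) by lra.
    set (del := eps * k / (4 * (1 + N))).
    assert (hdel : 0 < del) by (apply Rdiv_lt_0_compat; [apply Rmult_lt_0_compat|]; lra).
    destruct (norming_sdefect_small T hT y hy del hdel) as [n0 hn0].
    destruct (hb del hdel) as [n1 hn1]. unfold R_dist in hn1.
    exists (Nat.max n0 n1). intros m n hm hn. specialize (hd m n).
    pose proof (hn0 m ltac:(lia)). pose proof (hn0 n ltac:(lia)).
    assert (Rabs (b n - b m) < 2 * del).
    { replace (b n - b m) with ((b n - l) - (b m - l)) by ring.
      eapply Rle_lt_trans; [apply Rabs_triang|]. rewrite Rabs_Ropp.
      pose proof (hn1 m ltac:(lia)). pose proof (hn1 n ltac:(lia)). lra. }
    assert (Rabs (b n - b m) * N <= 2 * del * N) by (apply Rmult_le_compat_r; lra).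
    assert (del * (4 * (1 + N)) = eps * k) by (unfold del; field; lra).
    apply Rmult_lt_reg_l with k; auto. nra. }
  exists (vadd gl (vscal l e)).
  pose proof (vlim_add g _ gl _ hgl (vlim_scal_seq e b l hb)) as hsum.
  intros eps heps. destruct (hsum eps heps) as [n0 hn0]. exists n0. intros n hn.
  specialize (hn0 n hn). unfold g in hn0. rewrite vsub_add in hn0. exact hn0.
Qed.

Lemma opnorm_on_orth_step (S : H -> Prop) (e : H) : (forall x, ~ M_set T x) ->
  S vzero -> (forall a x, S x -> S (vscal a x)) ->
  (forall x y a, S x -> S y -> S (vsub x (vscal a y))) ->
  S e -> nrm e = 1 -> N <= opnorm_on T S -> N <= opnorm_on T (fun x => S x /\ inner x e = 0).
Proof.
  intros hM S0 Sscal Ssub Se he hS. apply Rnot_lt_le. intro hlt.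
  set (S' := fun x => S x /\ inner x e = 0) in *.
  assert (S'0 : S' vzero) by (split; [auto | apply inner_0_l]).
  assert (S'scal : forall a x, S' x -> S' (vscal a x)).
  { intros a x [hx1 hx2]. split; auto. rewrite inner_scal_l, hx2. ring. }
  assert (hq : 0 <= opnorm_on T S' < N) by (split; [apply opnorm_on_ge0|]; auto).
  destruct (norming_seq_in T hT hN S S0 Sscal hS) as [xs [hxS hxs]].
  destruct (bolzano_weierstrass (fun n => inner (xs n) e) 1) as [phi [l [hphi hcv]]].
  { intro n. eapply Rle_trans; [apply inner_abs_le|]. rewrite (proj1 hxs n), he. lra. }
  set (y := fun n => xs (phi n)).
  assert (hy : norming_seq T y).
  { split; [intro n; apply hxs|]. apply (Un_cv_subseq _ _ phi hphi (proj2 hxs)). }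
  destruct (norming_seq_vlim_of_gap e y (fun n => inner (y n) e) l (opnorm_on T S') he hq)
    as [x hx]; auto.
  - intros m n d. apply opnorm_on_bound; auto. unfold d, S'.
    assert (hg : forall k, S (vsub (y k) (vscal (inner (y k) e) e))) by (intro k; apply Ssub; [apply hxS | exact Se]).
    split.
    + rewrite <- (vscal_1 (vsub (y n) _)). apply Ssub; auto.
    + inner_simpl. rewrite <- nrm_sqr, he. ring.
  - apply (hM x). exact (maximizer_of_vlim T hT y x hy hx).
Qed.

End NoMaximizer.

Section Orthonormal.
Context {H : RHilbert} (E : nat -> H).

Definition orthonormal : Prop :=
  forall i j, inner (E i) (E j) = if Nat.eq_dec i j then 1 else 0.

Hypothesis hE : orthonormal.

Fixpoint partial_proj (z : H) (n : nat) : H :=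
  match n with
  | O => vzero
  | S n' => vadd (partial_proj z n') (vscal (inner z (E n')) (E n'))
  end.

Fixpoint coeff_sumsq (z : H) (n : nat) : R :=
  match n with
  | O => 0
  | S n' => coeff_sumsq z n' + inner z (E n') * inner z (E n')
  end.

Lemma partial_proj_inner_E z n j :
  inner (partial_proj z n) (E j) = if lt_dec j n then inner z (E j) else 0.
Proof.
  induction n; simpl.
  - rewrite inner_0_l. destruct (lt_dec j 0); [lia | auto].
  - inner_simpl. rewrite IHn, hE. destruct (Nat.eq_dec n j) as [e|e].
    + subst. destruct (lt_dec j j); [lia|]. destruct (lt_dec j (S j)); [ring | lia].
    + destruct (lt_dec j n); destruct (lt_dec j (S n)); try lia; ring.
Qed.

Lemma partial_proj_inner z m n : (n <= m)%nat ->
  inner (partial_proj z m) (partial_proj z n) = coeff_sumsq z n.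
Proof.
  induction n; intros hle; simpl; [apply inner_0_r|].
  inner_simpl. rewrite IHn by lia. rewrite partial_proj_inner_E. destruct (lt_dec n m); [ring | lia].
Qed.

Lemma inner_partial_proj z n : inner z (partial_proj z n) = coeff_sumsq z n.
Proof. induction n; simpl; [apply inner_0_r|]. inner_simpl. rewrite IHn. ring. Qed.

Lemma bessel z n : coeff_sumsq z n <= inner z z.
Proof.
  pose proof (inner_pos (vsub z (partial_proj z n))) as h. rewrite !inner_sub_l, !inner_sub_r in h.
  rewrite (inner_sym (partial_proj z n) z), inner_partial_proj, partial_proj_inner in h by auto.
  lra.
Qed.

Lemma partial_proj_cauchy z : forall eps, eps > 0 -> exists n0, forall m n,
  (m >= n0)%nat -> (n >= n0)%nat -> nrm (vsub (partial_proj z m) (partial_proj z n)) < eps.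
Proof.
  intros eps he.
  assert (hc : Cauchy_crit (coeff_sumsq z)).
  { apply CV_Cauchy, growing_cv.
    - intro n. simpl. pose proof (Rle_0_sqr (inner z (E n))) as h. unfold Rsqr in h. lra.
    - exists (inner z z). intros r [i ->]. apply bessel. }
  destruct (hc (eps * eps) ltac:(nra)) as [n0 hn0]. exists n0.
  assert (key : forall a b, (b <= a)%nat -> Rabs (coeff_sumsq z a - coeff_sumsq z b) < eps * eps ->
            nrm (vsub (partial_proj z a) (partial_proj z b)) < eps).
  { intros a b hab h. apply Rnot_le_lt. intro hge.
    assert (e : inner (vsub (partial_proj z a) (partial_proj z b))
                      (vsub (partial_proj z a) (partial_proj z b))
                = coeff_sumsq z a - coeff_sumsq z b).
    { inner_simpl. rewrite (inner_sym (partial_proj z b) (partial_proj z a)),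
        !partial_proj_inner by lia. ring. }
    rewrite <- nrm_sqr in e. pose proof (Rle_abs (coeff_sumsq z a - coeff_sumsq z b)). nra. }
  intros m n hm hn. specialize (hn0 m n hm hn). unfold Rdist in hn0.
  destruct (le_lt_dec n m) as [h|h]; [apply key; auto|].
  rewrite nrm_sub_sym. apply key; [lia|]. rewrite Rabs_minus_sym. auto.
Qed.

(* Junk value [vzero] is never used: the partial projections always converge. *)
Definition proj (z : H) : H := epsilon (inhabits vzero) (vlim (partial_proj z)).

Lemma proj_spec z : vlim (partial_proj z) (proj z).
Proof. unfold proj. apply epsilon_spec, complete_vlim, partial_proj_cauchy. Qed.

Lemma partial_proj_add z1 z2 n :
  partial_proj (vadd z1 z2) n = vadd (partial_proj z1 n) (partial_proj z2 n).
Proof.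
  apply vec_ext. induction n; intro w; simpl; inner_simpl; [ring|]. rewrite IHn. inner_simpl. ring.
Qed.

Lemma partial_proj_scal a z n : partial_proj (vscal a z) n = vscal a (partial_proj z n).
Proof.
  apply vec_ext. induction n; intro w; simpl; inner_simpl; [ring|]. rewrite IHn. inner_simpl. ring.
Qed.

Lemma BL_proj : BL proj.
Proof.
  split; [split|].
  - intros x y. apply (vlim_unique (partial_proj (vadd x y))); [apply proj_spec|].
    intros eps he. destruct (vlim_add _ _ _ _ (proj_spec x) (proj_spec y) eps he) as [n0 hn].
    exists n0. intros n hn2. rewrite partial_proj_add. auto.
  - intros a x. apply (vlim_unique (partial_proj (vscal a x))); [apply proj_spec|].
    intros eps he. destruct (vlim_scal _ _ a (proj_spec x) eps he) as [n0 hn].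
    exists n0. intros n hn2. rewrite partial_proj_scal. auto.
  - exists 1. intro x. rewrite Rmult_1_l. apply (vlim_nrm_le (partial_proj x)); [apply proj_spec|].
    intro n. apply nrm_le_of_sqr; [apply nrm_ge0|].
    rewrite partial_proj_inner, nrm_sqr by auto. apply bessel.
Qed.

Lemma proj_E j : proj (E j) = E j.
Proof.
  apply (vlim_unique (partial_proj (E j))); [apply proj_spec|].
  apply vlim_eventually_const. exists (S j). intros n hn. symmetry. apply vsub_eq0, inner_def.
  inner_simpl. rewrite (inner_sym (partial_proj (E j) n) (E j)), inner_partial_proj,
    partial_proj_inner by auto.
  assert (hs : forall m, coeff_sumsq (E j) m = if lt_dec j m then 1 else 0).
  { induction m; simpl; [destruct (lt_dec j 0); [lia | auto]|].
    rewrite IHm, hE. destruct (Nat.eq_dec j m) as [e|e].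
    - subst. destruct (lt_dec m m); [lia|]. destruct (lt_dec m (S m)); [ring | lia].
    - destruct (lt_dec j m); destruct (lt_dec j (S m)); try lia; ring. }
  rewrite !hs, hE. destruct (Nat.eq_dec j j); [|lia]. destruct (lt_dec j n); [ring | lia].
Qed.

Lemma proj_orth z : (forall k, inner z (E k) = 0) -> proj z = vzero.
Proof.
  intros h. apply (vlim_unique (partial_proj z)); [apply proj_spec|].
  apply vlim_eventually_const. exists O. intros n _. apply inner_def.
  rewrite partial_proj_inner by auto.
  induction n; simpl; auto. rewrite IHn, h. ring.
Qed.

End Orthonormal.

Section NoMaximizerSplit.
Context {H : RHilbert} (T : H -> H) (hT : BL T) (hN : 0 < opnorm T)
  (hM : forall x, ~ M_set T x).

Let N := opnorm T.

Definition orth_list (l : list H) (x : H) : Prop := forall y, In y l -> inner x y = 0.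

Definition next_near_maximizer (l : list H) : H :=
  epsilon (inhabits vzero) (fun x => orth_list l x /\ nrm x = 1 /\
     N - N / (INR (length l) + 2) < nrm (T x)).

Fixpoint near_maximizer_prefix (k : nat) : list H :=
  match k with
  | O => nil
  | S k' => near_maximizer_prefix k' ++ next_near_maximizer (near_maximizer_prefix k') :: nil
  end.

Definition near_maximizer (k : nat) : H := next_near_maximizer (near_maximizer_prefix k).

Lemma orth_list_vzero l : orth_list l vzero.
Proof. intros y _. apply inner_0_l. Qed.

Lemma orth_list_scal l a x : orth_list l x -> orth_list l (vscal a x).
Proof. intros hx y hy. rewrite inner_scal_l, hx; auto. ring. Qed.

Lemma orth_list_sub l x y a : orth_list l x -> orth_list l y -> orth_list l (vsub x (vscal a y)).
Proof. intros hx hy z hz. inner_simpl. rewrite hx, hy; auto. ring. Qed.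

Lemma next_near_maximizer_spec l : N <= opnorm_on T (orth_list l) ->
  orth_list l (next_near_maximizer l) /\ nrm (next_near_maximizer l) = 1 /\
  N - N / (INR (length l) + 2) < nrm (T (next_near_maximizer l)).
Proof.
  intros hl. unfold next_near_maximizer. apply epsilon_spec.
  pose proof (pos_INR (length l)).
  assert (he : 0 < N / (INR (length l) + 2) < opnorm_on T (orth_list l)).
  { split; [apply Rdiv_lt_0_compat; unfold N in *; lra|].
    apply Rlt_le_trans with N; auto. apply Rmult_lt_reg_r with (INR (length l) + 2); [lra|].
    unfold Rdiv. rewrite Rmult_assoc, Rinv_l by lra. unfold N in *. nra. }
  destruct (unit_near_maximizer_on T hT (orth_list l) _ (orth_list_vzero l) (orth_list_scal l) he)
    as [x [hx1 [hx2 hx3]]].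
  exists x. repeat split; auto. lra.
Qed.

Lemma near_maximizer_prefix_opnorm k : N <= opnorm_on T (orth_list (near_maximizer_prefix k)).
Proof.
  induction k as [|k IH]; simpl.
  { apply (opnorm_on_mono T (fun _ => True)); auto. intros x _ y []. }
  set (l := near_maximizer_prefix k) in *. set (e := next_near_maximizer l).
  destruct (next_near_maximizer_spec l IH) as [he1 [he2 _]]. fold e in he1, he2.
  apply Rle_trans with (opnorm_on T (fun x => orth_list l x /\ inner x e = 0)).
  - apply (opnorm_on_orth_step T hT hN); auto using orth_list_vzero, orth_list_scal, orth_list_sub.
  - apply opnorm_on_mono; auto; [split; [apply orth_list_vzero | apply inner_0_l]|].
    intros x [hx1 hx2] y hy. apply in_app_or in hy as [hy | [<- | []]]; auto.
Qed.

Lemma near_maximizer_spec k :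
  orth_list (near_maximizer_prefix k) (near_maximizer k) /\ nrm (near_maximizer k) = 1 /\
  N - N / (INR k + 2) < nrm (T (near_maximizer k)).
Proof.
  assert (hlen : length (near_maximizer_prefix k) = k).
  { induction k; simpl; auto. rewrite length_app, IHk. simpl. lia. }
  pose proof (next_near_maximizer_spec _ (near_maximizer_prefix_opnorm k)) as h.
  rewrite hlen in h. exact h.
Qed.

Lemma near_maximizer_in_prefix k i : (i < k)%nat -> In (near_maximizer i) (near_maximizer_prefix k).
Proof.
  induction k; intros h; [lia|]. simpl. apply in_or_app. destruct (Nat.eq_dec i k) as [->|e].
  - right. left. reflexivity.
  - left. apply IHk. lia.
Qed.

Lemma near_maximizer_inner i j :
  inner (near_maximizer i) (near_maximizer j) = if Nat.eq_dec i j then 1 else 0.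
Proof.
  destruct (Nat.eq_dec i j) as [<-|e].
  - rewrite <- nrm_sqr, (proj1 (proj2 (near_maximizer_spec i))). ring.
  - destruct (lt_dec j i) as [h|h].
    + apply (proj1 (near_maximizer_spec i)), near_maximizer_in_prefix. auto.
    + rewrite inner_sym. apply (proj1 (near_maximizer_spec j)), near_maximizer_in_prefix. lia.
Qed.

Lemma norming_near_maximizer (f : nat -> nat) : (forall n, (n <= f n)%nat) ->
  norming_seq T (fun n => near_maximizer (f n)).
Proof.
  intros hf. apply norming_seq_of_lower; auto; intro n; [apply near_maximizer_spec|].
  destruct (near_maximizer_spec (f n)) as [_ [_ h]]. fold N.
  assert (N / (INR (f n) + 2) <= N / (INR n + 2)); [|lra].
  pose proof (pos_INR n). apply Rmult_le_compat_l; [unfold N; lra|].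
  apply Rinv_le_contravar; [lra|]. apply Rplus_le_compat_r, le_INR, hf.
Qed.

(* [A = T ∘ P] with [P] the projection onto the even near-maximizers, read along odd and even ones. *)
Lemma split_of_no_maximizer : exists A u v L, norming_split T A u v L.
Proof.
  set (E := fun k => near_maximizer (2 * k)).
  assert (hON : orthonormal E).
  { intros i j. unfold E. rewrite near_maximizer_inner.
    destruct (Nat.eq_dec (2 * i) (2 * j)); destruct (Nat.eq_dec i j); auto; lia. }
  assert (hv : norming_seq T E) by (apply norming_near_maximizer; intro; lia).
  exists (fun z => T (proj E z)), (fun n => near_maximizer (2 * n + 1)), E, (N * N).
  split; [apply BL_comp; auto; apply BL_proj; auto|].
  split; [apply norming_near_maximizer; intro; lia|]. split; [auto|]. split; [|split].
  - apply (Un_cv_ext (fun _ => 0)); [|apply Un_cv_const]. intro n.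
    rewrite proj_orth, linear_zero, inner_0_l; auto; [apply hT|].
    intro k. unfold E. rewrite near_maximizer_inner.
    destruct (Nat.eq_dec (2 * n + 1) (2 * k)); auto. lia.
  - apply (Un_cv_ext (fun n => inner (T (E n)) (T (E n)))); [intro n; rewrite proj_E; auto|].
    apply norming_sqr_cv; auto.
  - unfold N. nra.
Qed.

End NoMaximizerSplit.

Lemma split_of_not_unique_maximizer_with_gap {H : RHilbert} (T : H -> H) :
  BL T -> 0 < opnorm T -> ~ unique_maximizer_with_gap T -> exists A u v L, norming_split T A u v L.
Proof.
  intros hT hN hn.
  destruct (not_unique_maximizer_with_gap_cases T hT hn) as [[x [y [hx [hy [h1 h2]]]]]|[[x0 [hx0 hge]]|hM]].
  - exact (split_of_two_maximizers T hN x y hx hy h1 h2).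
  - exact (split_of_no_gap T hT hN x0 hx0 hge).
  - exact (split_of_no_maximizer T hT hN hM).
Qed.

Theorem theorem3p2 (H : RHilbert) (T : H -> H) (HT : BL T)
  (HT0 : ~ (forall x, T x = vzero)) :
  let cond1 := smooth_point T in
  let cond2 := exists x0 : H, nrm x0 = 1 /\
      (forall x, M_set T x <-> (x = x0 \/ x = vopp x0)) /\
      opnorm_on T (orth x0) < opnorm T in
  let cond3 := forall A : H -> H, BL A ->
      (BJ_orth T A <->
       (forall xs, norming_seq T xs ->
        forall l, subseq_limit (fun n => inner (A (xs n)) (T (xs n))) l -> l = 0)) in
  (cond1 <-> cond2) /\ (cond2 <-> cond3) /\ (cond1 <-> cond3).
Proof.
  intros cond1 cond2 cond3.
  pose proof (opnorm_gt0 T HT HT0) as hN.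
  assert (h2 : cond2 -> cond1 /\ cond3).
  { intros [x0 [_ [hM hgap]]]. assert (hx0 : M_set T x0) by (apply hM; auto).
    split; [exact (smooth_point_of_gap T HT x0 hx0 hgap hN)
           | exact (BJ_norming_criterion_of_gap T HT x0 hx0 hgap)]. }
  assert (hn2 : ~ cond2 -> ~ cond1 /\ ~ cond3).
  { intros hn. destruct (split_of_not_unique_maximizer_with_gap T HT hN hn) as [A [u [v [L hs]]]].
    split; [exact (not_smooth_of_split T HT A u v L hN hs)
           | exact (not_BJ_norming_criterion_of_split T HT A u v L hs)]. }
  destruct (classic cond2); tauto.
Qed.
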